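(* Let the data $\eta,Q_g,Q_p,\Psi,c_{max},\theta_s,S$ be as in the context. Then there exists at least one $c\in[c_{max},0]$ for which the interface problem (P$_c$) described in the context admits a solution $\theta$, and every such $c$ lies in the open interval $(c_{max},0)$.
   Context: Dimensionless travelling-wave formulation of a solid-propellant combustion model ($x<0$ inert solid, $x>0$ gas, interface at $x=0$; $\theta$ dimensionless temperature; $c<0$ dimensionless regression velocity). Data: $\eta>0$; the gas reaction heat $Q_g>0$ and the pyrolysis heat $Q_p\in\mathbb R$ with $Q_p>-Q_g$; $\Psi:[0,1]\to[0,\infty)$ of class $C^\infty$ with $\Psi(\theta)>0$ for $\theta\in[0,1)$ and $\Psi(1)=0$; a number $c_{max}<0$ and a surface-temperature map $\theta_s:[c_{max},0]\to[0,1]$ (inverse of a pyrolysis law with cut-off at the initial temperature) that is continuous and strictly decreasing with $\theta_s(0)=0$, $\theta_s(c_{max})=1$, and $C^\infty$ on $[c_{max},0)$ with $\theta_s'(c)<0$ there. Define $S(c):=\eta\,\frac{Q_p}{Q_p+Q_g}\,c$. For $c\in[c_{max},0]$, problem (P$_c$) asks for $\theta:\mathbb R\to[0,1]$, continuous, of class $C^2$ on $(-\infty,0]$ and on $[0,\infty)$ (one-sided derivatives at $0$), such that $\theta''+c\theta'=0$ for $x<0$; $\theta''+\eta c\theta'=-\Psi(\theta)$ for $x>0$; $\theta(x)\to0$ as $x\to-\infty$, $\theta(0)=\theta_s(c)$, $\theta(x)\to1$ as $x\to+\infty$, $\theta'(x)\to0$ as $x\to\pm\infty$; and the interface heat balance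 $\theta'(0^+)-\eta\,\theta'(0^-)=S(c)$. *)

From Stdlib Require Import Reals.
From Coquelicot Require Import Coquelicot.
Open Scope R_scope.

(* For an interior point
   this is the usual derivative, at an endpoint of an interval it is the
   one-sided derivative. *)
Definition deriv_within (P : R -> Prop) (f : R -> R) (x l : R) : Prop :=
  filterlim (fun y => (f y - f x) / (y - x))
    (within (fun y => P y /\ y <> x) (locally x)) (locally l).

Definition cont_within (P : R -> Prop) (f : R -> R) (x : R) : Prop :=
  filterlim f (within P (locally x)) (locally (f x)).

Definition C2_on (P : R -> Prop) (f d1 d2 : R -> R) : Prop :=
  forall x, P x ->
    deriv_within P f x (d1 x) /\ deriv_within P d1 x (d2 x) /\
    cont_within P d2 x.

Definition Cinf_on (P : R -> Prop) (f : R -> R) : Prop :=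
  exists D : nat -> R -> R,
    (forall x, P x -> D O x = f x) /\
    (forall n x, P x -> deriv_within P (D n) x (D (S n) x)).

Definition Sfun (eta Qg Qp c : R) : R := eta * (Qp / (Qp + Qg)) * c.

Definition solves_Pc (eta Qg Qp : R) (Psi thetas : R -> R) (c : R)
    (theta : R -> R) : Prop :=
  (forall x, 0 <= theta x <= 1) /\
  (forall x, continuous theta x) /\
  exists dl1 dl2 dr1 dr2 : R -> R,
    C2_on (fun x => x <= 0) theta dl1 dl2 /\
    C2_on (fun x => 0 <= x) theta dr1 dr2 /\
    (forall x, x < 0 -> dl2 x + c * dl1 x = 0) /\
    (forall x, 0 < x -> dr2 x + eta * c * dr1 x = - Psi (theta x)) /\
    filterlim theta (Rbar_locally m_infty) (locally 0) /\
    theta 0 = thetas c /\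
    filterlim theta (Rbar_locally p_infty) (locally 1) /\
    filterlim dl1 (Rbar_locally m_infty) (locally 0) /\
    filterlim dr1 (Rbar_locally p_infty) (locally 0) /\
    dr1 0 - eta * dl1 0 = Sfun eta Qg Qp c.

(* For x < 0 the equation is linear and the decay at -oo forces
   theta = thetas c * exp (- c x); the interface condition then prescribes
   theta'(0+), so the right half solves an initial value problem for
   u'' = - eta c u' - Psi(u).  After extending Psi to a globally Lipschitz
   function, Picard iteration gives these solutions for every c, and
   Gronwall's inequality makes them depend continuously on c.

   Shooting in c: at c = 0 the trajectory starts with zero slope and turns
   down before reaching 1; at c = cmax it starts at 1 with positive slope and
   crosses 1.  Both behaviours are open in c and mutually exclusive, so some c
   in between shows neither.  That trajectory keeps u' > 0 and u < 1 forever: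
   the remaining exit, through (u, u') = (1, 0), is ruled out because
   (1 - u + u') e^((1 + K) x) is nondecreasing, K being a bound for
   Psi(t) / (1 - t).  Increasing and bounded, u then tends to 1 and u' to 0.

   The endpoints are excluded by the slopes at the interface: at cmax, theta
   has its maximum 1 at 0 while the interface condition makes its right slope
   positive; at 0 both slopes vanish and theta'' = - Psi(theta) <= 0 keeps
   theta <= 0 on the right. *)

From Stdlib Require Import Reals Lra Lia Factorial Classical.
From Coquelicot Require Import Coquelicot.
Open Scope R_scope.

Lemma locally_R_iff (x : R) (P : R -> Prop) :
  locally x P <-> exists d, 0 < d /\ forall y, Rabs (y - x) < d -> P y.
Proof.
  split.
  - intros [d Hd]. exists d. split; [apply cond_pos|]. intros y Hy. now apply Hd.
  - intros [d [Hd H]]. exists (mkposreal d Hd). intros y Hy. now apply H.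
Qed.

Lemma filterlim_within_R_iff (P : R -> Prop) (f : R -> R) (x l : R) :
  filterlim f (within P (locally x)) (locally l) <->
  forall e, 0 < e -> exists d, 0 < d /\
    forall y, Rabs (y - x) < d -> P y -> Rabs (f y - l) < e.
Proof.
  rewrite filterlim_locally. split.
  - intros H e He. apply (locally_R_iff x), (H (mkposreal e He)).
  - intros H e. apply locally_R_iff, (H e (cond_pos e)).
Qed.

Lemma continuous_R_iff (f : R -> R) (x : R) :
  continuous f x <-> forall e, 0 < e -> exists d, 0 < d /\
    forall y, Rabs (y - x) < d -> Rabs (f y - f x) < e.
Proof.
  unfold continuous. rewrite filterlim_locally. split.
  - intros H e He. apply (locally_R_iff x), (H (mkposreal e He)).
  - intros H e. apply locally_R_iff, (H e (cond_pos e)).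
Qed.

Lemma filterlim_p_infty_R_iff (f : R -> R) (l : R) :
  filterlim f (Rbar_locally p_infty) (locally l) <->
  forall e, 0 < e -> exists M, forall x, M < x -> Rabs (f x - l) < e.
Proof.
  rewrite filterlim_locally. split.
  - intros H e He. exact (H (mkposreal e He)).
  - intros H e. exact (H e (cond_pos e)).
Qed.

Lemma filterlim_m_infty_R_iff (f : R -> R) (l : R) :
  filterlim f (Rbar_locally m_infty) (locally l) <->
  forall e, 0 < e -> exists M, forall x, x < M -> Rabs (f x - l) < e.
Proof.
  rewrite filterlim_locally. split.
  - intros H e He. exact (H (mkposreal e He)).
  - intros H e. exact (H e (cond_pos e)).
Qed.

Lemma eq_0_of_forall_abs_lt (z : R) : (forall e, 0 < e -> Rabs z < e) -> z = 0.
Proof.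
  intros H. destruct (Req_dec z 0) as [|Hz]; auto.
  specialize (H (Rabs z) (Rabs_pos_lt z Hz)). lra.
Qed.

Lemma continuous_lt_near (r : R -> R) (x0 b : R) : continuous r x0 -> r x0 < b ->
  exists d, 0 < d /\ forall x, Rabs (x - x0) < d -> r x < b.
Proof.
  intros C Hr. destruct (proj1 (continuous_R_iff r x0) C (b - r x0) ltac:(lra)) as [d [Hd H]].
  exists d. split; auto. intros x Hx. specialize (H x Hx). apply Rabs_def2 in H. lra.
Qed.

Lemma filterlim_mul_exp_m_infty (k A : R) : 0 < k ->
  filterlim (fun x => A * exp (k * x)) (Rbar_locally m_infty) (locally 0).
Proof.
  intros Hk.
  assert (H : is_lim (fun x => A * exp (k * x)) m_infty (A * 0)).
  { apply (is_lim_scal_l (fun x => exp (k * x)) A m_infty 0).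
    apply (is_lim_comp exp (fun x => k * x) m_infty 0 m_infty); [apply is_lim_exp_m| |].
    - replace m_infty with (Rbar_mult k m_infty) at 2
        by (rewrite Rbar_mult_comm;
            exact (is_Rbar_mult_unique _ _ _ (is_Rbar_mult_m_infty_pos k Hk))).
      apply (is_lim_scal_l (fun x => x) k m_infty m_infty), is_lim_id.
    - exists 0. intros; discriminate. }
  rewrite Rmult_0_r in H. exact H.
Qed.

Lemma continuous_of_is_derive (f : R -> R) (x l : R) :
  is_derive f x l -> continuous f x.
Proof. intros H. apply (ex_derive_continuous (V := R_NormedModule)). now exists l. Qed.

Lemma le_of_derive_nonneg (f df : R -> R) (a b : R) :
  a <= b -> (forall x, a <= x <= b -> is_derive f x (df x)) ->
  (forall x, a <= x <= b -> 0 <= df x) -> f a <= f b.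
Proof.
  intros Hab Hd Hpos. destruct (Req_dec a b) as [<-|Hne]; [lra|].
  destruct (MVT_cor3 f df a b) as [c [Hac [Hcb ->]]]; [lra| |].
  - intros x Hax Hxb. apply is_derive_Reals, Hd. lra.
  - assert (0 <= df c) by (apply Hpos; lra). nra.
Qed.

Lemma le_of_derive_ge (f df : R -> R) (b x y : R) : x <= y ->
  (forall z, x <= z <= y -> is_derive f z (df z)) -> (forall z, x <= z <= y -> b <= df z) ->
  f x + b * (y - x) <= f y.
Proof.
  intros Hxy Hd Hb.
  assert (f x - b * x <= f y - b * y); [|lra].
  apply (le_of_derive_nonneg (fun z => f z - b * z) (fun z => df z - b)); auto.
  - intros z Hz. auto_derive; [exists (df z); now apply Hd|].
    replace (Derive (fun z => f z) z) with (df z) by (symmetry; now apply is_derive_unique, Hd).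
    ring.
  - intros z Hz. specialize (Hb z Hz). lra.
Qed.

Lemma const_of_derive_zero (f df : R -> R) (a b : R) :
  a <= b -> (forall x, a <= x <= b -> is_derive f x (df x)) ->
  (forall x, a <= x <= b -> df x = 0) -> f a = f b.
Proof.
  intros Hab Hd H0. apply Rle_antisym.
  - apply (le_of_derive_nonneg f df); auto. intros x Hx. rewrite H0; lra.
  - apply Ropp_le_cancel, (le_of_derive_nonneg (fun x => - f x) (fun x => - df x)); auto.
    + intros x Hx. apply (is_derive_opp f x (df x)), Hd; lra.
    + intros x Hx. rewrite H0; lra.
Qed.

Lemma lt_right_of_derive_pos (f : R -> R) (x d : R) :
  is_derive f x d -> 0 < d ->
  exists del, 0 < del /\ forall h, 0 < h < del -> f x < f (x + h).
Proof.
  intros H Hd. apply is_derive_Reals in H. destruct (H (d / 2) ltac:(lra)) as [del Hdel].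
  exists del. split; [apply cond_pos|]. intros h Hh.
  specialize (Hdel h ltac:(lra) ltac:(rewrite Rabs_right; lra)).
  apply Rabs_def2 in Hdel.
  assert (0 < (f (x + h) - f x) / h) by lra.
  assert (0 < (f (x + h) - f x) / h * h) by (apply Rmult_lt_0_compat; lra).
  unfold Rdiv in *. rewrite Rmult_assoc, Rinv_l in * by lra. lra.
Qed.

Lemma exp_le_compat (x y : R) : x <= y -> exp x <= exp y.
Proof. intros [H|H]; [left; now apply exp_increasing|now rewrite H; right]. Qed.

Lemma is_derive_mul_exp (h : R -> R) (x dh k : R) : is_derive h x dh ->
  is_derive (fun y => h y * exp (k * y)) x ((dh + k * h x) * exp (k * x)).
Proof.
  intros H. auto_derive; [now exists dh|].
  replace (Derive (fun y => h y) x) with dh by (symmetry; now apply is_derive_unique). ring.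
Qed.

Lemma exp_comparison_le (w dw : R -> R) (a b x y : R) : x <= y ->
  (forall z, x <= z <= y -> is_derive w z (dw z)) ->
  (forall z, x <= z <= y -> dw z <= a * (w z - b)) ->
  w y - b <= (w x - b) * exp (a * (y - x)).
Proof.
  intros Hxy Hd Hle.
  assert (Hpsi : (w y - b) * exp (- a * y) <= (w x - b) * exp (- a * x)).
  { apply Ropp_le_cancel.
    apply (le_of_derive_nonneg (fun z => - ((w z - b) * exp (- a * z)))
             (fun z => - ((dw z + - a * (w z - b)) * exp (- a * z)))); auto.
    - intros z Hz. apply (is_derive_opp (fun z => (w z - b) * exp (- a * z))).
      apply (is_derive_mul_exp (fun z => w z - b)).
      auto_derive; [exists (dw z); now apply Hd|].
      replace (Derive (fun z => w z) z) with (dw z) by (symmetry; now apply is_derive_unique, Hd).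
      ring.
    - intros z Hz. specialize (Hle z Hz). pose proof (exp_pos (- a * z)). nra. }
  assert (E1 : exp (- a * y) * exp (a * y) = 1)
    by (rewrite <- exp_plus, <- exp_0; f_equal; ring).
  assert (E2 : exp (- a * x) * exp (a * y) = exp (a * (y - x)))
    by (rewrite <- exp_plus; f_equal; ring).
  apply (Rmult_le_compat_r (exp (a * y))) in Hpsi; [|left; apply exp_pos].
  rewrite !Rmult_assoc, E1, E2, Rmult_1_r in Hpsi. exact Hpsi.
Qed.

Lemma exp_comparison_ge (w dw : R -> R) (a b x y : R) : x <= y ->
  (forall z, x <= z <= y -> is_derive w z (dw z)) ->
  (forall z, x <= z <= y -> a * (w z - b) <= dw z) ->
  (w x - b) * exp (a * (y - x)) <= w y - b.
Proof.
  intros Hxy Hd Hge.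
  assert (H := exp_comparison_le (fun z => - w z) (fun z => - dw z) a (- b) x y Hxy).
  assert (- w y - - b <= (- w x - - b) * exp (a * (y - x))); [|lra].
  apply H.
  - intros z Hz. apply (is_derive_opp w z (dw z)), Hd, Hz.
  - intros z Hz. specialize (Hge z Hz). lra.
Qed.

Lemma cont_within_of_deriv_within (P : R -> Prop) (f : R -> R) (x l : R) :
  deriv_within P f x l -> cont_within P f x.
Proof.
  unfold deriv_within, cont_within. rewrite !filterlim_within_R_iff.
  intros H e He. destruct (H 1 Rlt_0_1) as [d [Hd Hq]].
  assert (Hl : 0 < Rabs l + 1) by (pose proof (Rabs_pos l); lra).
  exists (Rmin d (e / (Rabs l + 1))). split; [apply Rmin_pos; auto; apply Rdiv_lt_0_compat; lra|].
  intros y Hy Py. destruct (Req_dec y x) as [->|Hne]; [rewrite Rminus_diag, Rabs_R0; lra|].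
  specialize (Hq y (Rlt_le_trans _ _ _ Hy (Rmin_l _ _)) (conj Py Hne)).
  assert (Hy' : Rabs (y - x) * (Rabs l + 1) < e).
  { apply (Rmult_lt_reg_r (/ (Rabs l + 1))); [now apply Rinv_0_lt_compat|].
    rewrite Rmult_assoc, Rinv_r, Rmult_1_r by lra. exact (Rlt_le_trans _ _ _ Hy (Rmin_r _ _)). }
  replace (f y - f x) with ((f y - f x) / (y - x) * (y - x)) by (field; lra).
  rewrite Rabs_mult.
  assert (Rabs ((f y - f x) / (y - x)) <= Rabs l + 1).
  { replace ((f y - f x) / (y - x)) with ((f y - f x) / (y - x) - l + l) by ring.
    eapply Rle_trans; [apply Rabs_triang|]. lra. }
  pose proof (Rabs_pos (y - x)). nra.
Qed.

Lemma is_derive_of_deriv_within (P : R -> Prop) (f : R -> R) (x l : R) :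
  locally x P -> deriv_within P f x l -> is_derive f x l.
Proof.
  rewrite locally_R_iff. intros [d0 [Hd0 HP]] H. apply is_derive_Reals. intros e He.
  destruct (proj1 (filterlim_within_R_iff _ _ _ _) H e He) as [d [Hd Hq]].
  exists (mkposreal (Rmin d0 d) (Rmin_pos _ _ Hd0 Hd)). simpl. intros h Hh Hhd.
  assert (Hxh : Rabs (x + h - x) = Rabs h) by (f_equal; ring).
  specialize (Hq (x + h)).
  replace (x + h - x) with h in Hq by ring. apply Hq.
  - exact (Rlt_le_trans _ _ _ Hhd (Rmin_r _ _)).
  - split; [|lra]. apply HP. rewrite Hxh. exact (Rlt_le_trans _ _ _ Hhd (Rmin_l _ _)).
Qed.

Lemma deriv_within_of_is_derive (P : R -> Prop) (f g : R -> R) (x l : R) :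
  (forall y, P y -> f y = g y) -> P x -> is_derive g x l -> deriv_within P f x l.
Proof.
  intros Hfg Px H. apply is_derive_Reals in H. apply filterlim_within_R_iff. intros e He.
  destruct (H e He) as [d Hd]. exists d. split; [apply cond_pos|]. intros y Hy [Py Hyx].
  specialize (Hd (y - x) ltac:(lra) Hy). replace (x + (y - x)) with y in Hd by ring.
  now rewrite (Hfg y Py), (Hfg x Px).
Qed.

Lemma cont_within_of_continuous (P : R -> Prop) (f g : R -> R) (x : R) :
  (forall y, P y -> f y = g y) -> P x -> continuous g x -> cont_within P f x.
Proof.
  intros Hfg Px H. apply filterlim_within_R_iff. intros e He.
  destruct (proj1 (continuous_R_iff _ _) H e He) as [d [Hd Hd']]. exists d. split; auto.
  intros y Hy Py. rewrite (Hfg y Py), (Hfg x Px). auto.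
Qed.

Lemma C2_on_of_derive (P : R -> Prop) (f g d1 d2 : R -> R) : (forall y, P y -> f y = g y) ->
  (forall x, P x -> is_derive g x (d1 x) /\ is_derive d1 x (d2 x) /\ continuous d2 x) ->
  C2_on P f d1 d2.
Proof.
  intros Hfg H x Px. destruct (H x Px) as [D1 [D2 C2]]. split; [|split].
  - now apply (deriv_within_of_is_derive P f g).
  - now apply (deriv_within_of_is_derive P d1 d1).
  - now apply (cont_within_of_continuous P d2 d2).
Qed.

Lemma deriv_within_nonpos_at_max (f : R -> R) (x l : R) :
  deriv_within (fun y => x <= y) f x l -> (forall y, x <= y -> f y <= f x) -> l <= 0.
Proof.
  intros H Hmax. apply Rnot_lt_le. intros Hl.
  destruct (proj1 (filterlim_within_R_iff _ _ _ _) H l Hl) as [d [Hd Hq]].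
  assert (Hy : Rabs (x + d / 2 - x) < d) by (rewrite Rabs_right; lra).
  assert (Hne : x <= x + d / 2 /\ x + d / 2 <> x) by lra.
  specialize (Hq (x + d / 2) Hy Hne).
  apply Rabs_def2 in Hq. specialize (Hmax (x + d / 2) ltac:(lra)).
  assert ((f (x + d / 2) - f x) / (x + d / 2 - x) <= 0); [|lra].
  apply Rmult_le_0_r; [lra|]. left. apply Rinv_0_lt_compat. lra.
Qed.

Lemma le_at_0_of_nonincreasing (f : R -> R) :
  cont_within (fun y => 0 <= y) f 0 -> (forall x y, 0 < x <= y -> f y <= f x) ->
  forall x, 0 < x -> f x <= f 0.
Proof.
  intros Cf Hdec x Hx. apply Rnot_lt_le. intros Hlt.
  destruct (proj1 (filterlim_within_R_iff _ _ _ _) Cf (f x - f 0) ltac:(lra)) as [d [Hd H]].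
  set (y := Rmin d x / 2).
  assert (Hy : 0 < y <= x /\ Rabs (y - 0) < d)
    by (unfold y; pose proof (Rmin_l d x); pose proof (Rmin_r d x);
        pose proof (Rmin_pos d x Hd Hx); rewrite Rabs_right; lra).
  specialize (H y (proj2 Hy) ltac:(lra)). apply Rabs_def2 in H.
  pose proof (Hdec y x (proj1 Hy)). lra.
Qed.

Lemma continuous_glue (F G : R -> R) (x : R) :
  (forall y, y <= 0 -> continuous F y) -> (forall y, 0 <= y -> continuous G y) -> F 0 = G 0 ->
  continuous (fun y => if Rle_dec y 0 then F y else G y) x.
Proof.
  intros CF CG H0. apply continuous_R_iff. intros e He.
  destruct (Rtotal_order x 0) as [Hx|[->|Hx]].
  - destruct (proj1 (continuous_R_iff F x) (CF x ltac:(lra)) e He) as [d [Hd H]].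
    exists (Rmin d (- x)). split; [apply Rmin_pos; lra|]. intros y Hy.
    pose proof (Rmin_l d (- x)). pose proof (Rmin_r d (- x)). apply Rabs_def2 in Hy as Hy'.
    destruct (Rle_dec y 0); [|lra]. destruct (Rle_dec x 0); [|lra]. apply H. lra.
  - destruct (proj1 (continuous_R_iff F 0) (CF 0 ltac:(lra)) e He) as [d1 [Hd1 H1]].
    destruct (proj1 (continuous_R_iff G 0) (CG 0 ltac:(lra)) e He) as [d2 [Hd2 H2]].
    exists (Rmin d1 d2). split; [apply Rmin_pos; lra|]. intros y Hy.
    pose proof (Rmin_l d1 d2). pose proof (Rmin_r d1 d2).
    destruct (Rle_dec 0 0); [|lra]. destruct (Rle_dec y 0); [apply H1; lra|].
    rewrite H0. apply H2. lra.
  - destruct (proj1 (continuous_R_iff G x) (CG x ltac:(lra)) e He) as [d [Hd H]].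
    exists (Rmin d x). split; [apply Rmin_pos; lra|]. intros y Hy.
    pose proof (Rmin_l d x). pose proof (Rmin_r d x). apply Rabs_def2 in Hy as Hy'.
    destruct (Rle_dec y 0); [lra|]. destruct (Rle_dec x 0); [lra|]. apply H. lra.
Qed.

Lemma exp_series_Cauchy (B Y : R) : Cauchy_series (fun n => B * (Y ^ n / INR (fact n))).
Proof.
  apply (Cauchy_ex_series (V := R_CompleteNormedModule)), (ex_series_scal_l (V := R_NormedModule)).
  exists (exp Y). eapply is_series_ext; [|apply (is_exp_Reals Y)].
  intros n. unfold scal; simpl; unfold mult; simpl. now rewrite pow_n_pow.
Qed.

Lemma dist_le_sum_increments (u a : nat -> R) :
  (forall i, Rabs (u (S i) - u i) <= a i) ->
  forall n m, (n <= m)%nat -> Rabs (u (S m) - u n) <= sum_n_m a n m.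
Proof.
  intros Ha n m Hnm. induction Hnm as [|m Hnm IH].
  - now rewrite sum_n_n.
  - rewrite sum_n_Sm by lia. unfold plus; simpl.
    replace (u (S (S m)) - u n) with ((u (S (S m)) - u (S m)) + (u (S m) - u n)) by ring.
    eapply Rle_trans; [apply Rabs_triang|]. specialize (Ha (S m)). lra.
Qed.

Lemma Cauchy_of_summable_increments (a : nat -> R) (e : R) :
  Cauchy_series a -> 0 < e -> exists N, forall u : nat -> R,
    (forall i, Rabs (u (S i) - u i) <= a i) ->
    forall n m, (N <= n)%nat -> (n <= m)%nat -> Rabs (u m - u n) < e.
Proof.
  intros Ha He. destruct (Ha (mkposreal e He)) as [N HN]. exists N.
  intros u Hu n m Hn Hm. destruct (Nat.eq_dec n m) as [<-|Hne].
  - rewrite Rminus_diag, Rabs_R0. lra.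
  - replace m with (S (pred m)) by lia.
    eapply Rle_lt_trans; [apply (dist_le_sum_increments u a Hu); lia|].
    eapply Rle_lt_trans; [apply Rle_abs|]. apply (HN n (pred m)); lia.
Qed.

Lemma lim_of_summable_increments (a u : nat -> R) :
  Cauchy_series a -> (forall i, Rabs (u (S i) - u i) <= a i) -> ex_finite_lim_seq u.
Proof.
  intros Ha Hu. apply ex_lim_seq_cauchy_corr. intros e.
  destruct (Cauchy_of_summable_increments a e Ha (cond_pos e)) as [N HN]. exists N.
  intros n m Hn Hm. destruct (Nat.le_gt_cases n m).
  - rewrite Rabs_minus_sym. now apply (HN u Hu).
  - apply (HN u Hu); lia.
Qed.

Lemma lim_uniform_of_summable_increments (a : nat -> R) (e : R) :
  Cauchy_series a -> 0 < e -> exists N, forall u : nat -> R,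
    (forall i, Rabs (u (S i) - u i) <= a i) ->
    forall n, (N <= n)%nat -> Rabs (real (Lim_seq u) - u n) <= e.
Proof.
  intros Ha He. destruct (Cauchy_of_summable_increments a e Ha He) as [N HN]. exists N.
  intros u Hu n Hn. destruct (lim_of_summable_increments a u Ha Hu) as [l Hl].
  rewrite (is_lim_seq_unique _ _ Hl). simpl.
  apply (is_lim_seq_le_loc (fun m => Rabs (u m - u n)) (fun _ => e) (Rabs (l - u n)) e).
  - exists n. intros m Hm. left. now apply (HN u Hu).
  - apply (is_lim_seq_abs _ (l - u n)), is_lim_seq_minus'; [exact Hl|apply is_lim_seq_const].
  - apply is_lim_seq_const.
Qed.

Lemma continuous_of_uniform_approx (h : R -> R) (F : nat -> R -> R) (x : R) :
  (forall n, continuous (F n) x) ->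
  (forall e, 0 < e -> exists n, forall y, Rabs (y - x) < 1 -> Rabs (h y - F n y) <= e) ->
  continuous h x.
Proof.
  intros HF Happ. apply continuous_R_iff. intros e He.
  destruct (Happ (e / 3) ltac:(lra)) as [n Hn].
  destruct (proj1 (continuous_R_iff _ _) (HF n) (e / 3) ltac:(lra)) as [d [Hd Hc]].
  exists (Rmin 1 d). split; [apply Rmin_pos; lra|]. intros y Hy.
  pose proof (Rmin_l 1 d). pose proof (Rmin_r 1 d).
  assert (Hx : Rabs (h x - F n x) <= e / 3) by (apply Hn; rewrite Rminus_diag, Rabs_R0; lra).
  specialize (Hn y ltac:(lra)). specialize (Hc y ltac:(lra)).
  rewrite Rabs_minus_sym in Hx.
  replace (h y - h x) with ((h y - F n y) + (F n y - F n x) + (F n x - h x)) by ring.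
  pose proof (Rabs_triang (h y - F n y + (F n y - F n x)) (F n x - h x)).
  pose proof (Rabs_triang (h y - F n y) (F n y - F n x)). lra.
Qed.

Lemma abs_RInt_sum_le (h1 h2 phi : R -> R) (x : R) : 0 <= x ->
  (forall t, 0 <= t <= x -> continuous h1 t /\ continuous h2 t /\ continuous phi t) ->
  (forall t, 0 <= t <= x -> Rabs (h1 t) + Rabs (h2 t) <= phi t) ->
  Rabs (RInt h1 0 x) + Rabs (RInt h2 0 x) <= RInt phi 0 x.
Proof.
  intros Hx C H.
  assert (Ex : forall h : R -> R, (forall t, 0 <= t <= x -> continuous h t) -> ex_RInt h 0 x).
  { intros h Ch. apply (ex_RInt_continuous (V := R_CompleteNormedModule)).
    rewrite Rmin_left, Rmax_right by lra. exact Ch. }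
  assert (E1 : ex_RInt h1 0 x) by (apply Ex; apply C).
  assert (E2 : ex_RInt h2 0 x) by (apply Ex; apply C).
  assert (Ea : forall h : R -> R, (forall t, 0 <= t <= x -> continuous h t) ->
                ex_RInt (fun t => Rabs (h t)) 0 x).
  { intros h Ch. apply Ex. intros t Ht. now apply continuous_Rabs_comp, Ch. }
  pose proof (abs_RInt_le h1 0 x Hx E1). pose proof (abs_RInt_le h2 0 x Hx E2).
  assert (Hsum : RInt (fun t => Rabs (h1 t) + Rabs (h2 t)) 0 x
                 = RInt (fun t => Rabs (h1 t)) 0 x + RInt (fun t => Rabs (h2 t)) 0 x)
    by (apply (RInt_plus (V := R_CompleteNormedModule)); apply Ea; apply C).
  assert (RInt (fun t => Rabs (h1 t) + Rabs (h2 t)) 0 x <= RInt phi 0 x); [|lra].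
  apply RInt_le; auto.
  - apply (ex_RInt_plus (V := R_CompleteNormedModule)); apply Ea; apply C.
  - apply Ex; apply C.
  - intros t Ht. apply H. lra.
Qed.

Lemma RInt_minus_continuous (h1 h2 : R -> R) (x : R) : 0 <= x ->
  (forall t, 0 <= t <= x -> continuous h1 t /\ continuous h2 t) ->
  RInt (fun t => h1 t - h2 t) 0 x = RInt h1 0 x - RInt h2 0 x.
Proof.
  intros Hx C. apply (RInt_minus (V := R_CompleteNormedModule));
    apply (ex_RInt_continuous (V := R_CompleteNormedModule));
    rewrite Rmin_left, Rmax_right by lra; apply C.
Qed.

Lemma RInt_exp_pow_fact (L A B : R) (n : nat) (x : R) :
  RInt (fun t => L * (A * exp (L * t) + B * ((L * t) ^ n / INR (fact n)))) 0 x
  = A * (exp (L * x) - 1) + B * ((L * x) ^ S n / INR (fact (S n))).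
Proof.
  set (F := fun t => A * exp (L * t) + B * ((L * t) ^ S n / INR (fact (S n)))).
  replace (A * (exp (L * x) - 1) + B * ((L * x) ^ S n / INR (fact (S n)))) with (F x - F 0).
  2:{ unfold F. rewrite Rmult_0_r, exp_0, pow_i by lia. unfold Rdiv. ring. }
  apply is_RInt_unique, (is_RInt_derive (V := R_CompleteNormedModule) F).
  - intros t _. unfold F. auto_derive; auto.
    change (match n with 0%nat => 1 | S _ => INR n + 1 end) with (INR (S n)).
    change (fact n + n * fact n)%nat with (fact (S n)).
    rewrite fact_simpl, mult_INR. field. split; [apply INR_fact_neq_0|apply not_0_INR; lia].
  - intros t _. apply (ex_derive_continuous (V := R_NormedModule)). auto_derive; auto.
Qed.

Lemma is_derive_plus_RInt_0 (c : R) (h : R -> R) (x : R) :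
  (forall t, continuous h t) -> is_derive (fun y => c + RInt h 0 y) x (h x).
Proof.
  intros H. replace (h x) with (0 + h x) by ring.
  apply (is_derive_plus (fun _ => c) (fun y => RInt h 0 y) x 0 (h x));
    [apply (is_derive_const (V := R_NormedModule))|].
  apply (is_derive_RInt h (fun y => RInt h 0 y) 0 x); [|apply H].
  apply filter_forall. intros y. apply (RInt_correct (V := R_CompleteNormedModule)).
  apply (ex_RInt_continuous (V := R_CompleteNormedModule)). intros; apply H.
Qed.

(** * Global solutions of Lipschitz planar systems *)

Definition rpos (x : R) : R := Rmax x 0.

Lemma rpos_nonneg (x : R) : 0 <= rpos x.
Proof. apply Rmax_r. Qed.

Lemma rpos_id (x : R) : 0 <= x -> rpos x = x.
Proof. intros Hx. unfold rpos. now rewrite Rmax_left. Qed.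

Lemma rpos_le (x X : R) : 0 <= X -> x <= X -> rpos x <= X.
Proof. intros. now apply Rmax_lub. Qed.

Lemma continuous_rpos (x : R) : continuous rpos x.
Proof.
  apply continuous_R_iff. intros e He. exists e. split; auto. intros y Hy.
  eapply Rle_lt_trans; [|exact Hy]. unfold rpos, Rmax.
  destruct (Rle_dec y 0), (Rle_dec x 0); unfold Rabs; repeat destruct Rcase_abs; lra.
Qed.

Lemma continuous_plus_RInt_rpos (c : R) (h : R -> R) (x : R) :
  (forall t, continuous h t) -> continuous (fun y => c + RInt h 0 (rpos y)) x.
Proof.
  intros H. apply (continuous_comp rpos (fun y => c + RInt h 0 y)); [apply continuous_rpos|].
  eapply continuous_of_is_derive. now apply is_derive_plus_RInt_0.
Qed.

Definition lipschitz2 (f g : R -> R -> R) (L : R) : Prop :=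
  forall a b a' b', Rabs (f a b - f a' b') + Rabs (g a b - g a' b')
                    <= L * (Rabs (a - a') + Rabs (b - b')).

Lemma lipschitz2_continuous (f g : R -> R -> R) (L : R) (u v : R -> R) (t : R) :
  0 < L -> lipschitz2 f g L -> continuous u t -> continuous v t ->
  continuous (fun s => f (u s) (v s)) t /\ continuous (fun s => g (u s) (v s)) t.
Proof.
  intros HL Hlip Cu Cv.
  assert (key : forall e, 0 < e -> exists d, 0 < d /\ forall y, Rabs (y - t) < d ->
     Rabs (f (u y) (v y) - f (u t) (v t)) + Rabs (g (u y) (v y) - g (u t) (v t)) < e).
  { intros e He.
    assert (He' : 0 < e / (2 * L)) by (apply Rdiv_lt_0_compat; lra).
    destruct (proj1 (continuous_R_iff u t) Cu _ He') as [d1 [Hd1 H1]].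
    destruct (proj1 (continuous_R_iff v t) Cv _ He') as [d2 [Hd2 H2]].
    exists (Rmin d1 d2). split; [now apply Rmin_pos|]. intros y Hy.
    specialize (H1 y (Rlt_le_trans _ _ _ Hy (Rmin_l _ _))).
    specialize (H2 y (Rlt_le_trans _ _ _ Hy (Rmin_r _ _))).
    eapply Rle_lt_trans; [apply Hlip|].
    replace e with (L * (e / (2 * L) + e / (2 * L))) by (field; lra).
    apply Rmult_lt_compat_l; lra. }
  split; apply continuous_R_iff; intros e He; destruct (key e He) as [d [Hd H]];
    exists d; split; auto; intros y Hy; specialize (H y Hy).
  - pose proof (Rabs_pos (g (u y) (v y) - g (u t) (v t))). lra.
  - pose proof (Rabs_pos (f (u y) (v y) - f (u t) (v t))). lra.
Qed.

Definition solves_system (f g : R -> R -> R) (u v : R -> R) : Prop :=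
  forall x, 0 <= x -> is_derive u x (f (u x) (v x)) /\ is_derive v x (g (u x) (v x)).

Section Picard.

Variables (f g : R -> R -> R) (L a0 b0 : R).
Hypotheses (HL : 0 < L) (Hlip : lipschitz2 f g L).

(* Through rpos the iterates are frozen at their value at 0 for x < 0: they are defined
   and continuous on all of R while every estimate only involves x >= 0. *)
Fixpoint picard (n : nat) : (R -> R) * (R -> R) :=
  match n with
  | O => (fun _ => a0, fun _ => b0)
  | S m => let (u, v) := picard m in
      (fun x => a0 + RInt (fun t => f (u t) (v t)) 0 (rpos x),
       fun x => b0 + RInt (fun t => g (u t) (v t)) 0 (rpos x))
  end.

Let pu n := fst (picard n).
Let pv n := snd (picard n).

Lemma picard_S (n : nat) (x : R) :
  pu (S n) x = a0 + RInt (fun t => f (pu n t) (pv n t)) 0 (rpos x) /\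
  pv (S n) x = b0 + RInt (fun t => g (pu n t) (pv n t)) 0 (rpos x).
Proof. unfold pu, pv. simpl. now destruct (picard n). Qed.

Lemma picard_continuous (n : nat) (x : R) : continuous (pu n) x /\ continuous (pv n) x.
Proof.
  revert x. induction n as [|n IH]; intros x.
  - split; apply continuous_const.
  - assert (C : forall t, continuous (fun s => f (pu n s) (pv n s)) t /\
                          continuous (fun s => g (pu n s) (pv n s)) t)
      by (intros t; destruct (IH t); now apply (lipschitz2_continuous f g L)).
    split.
    + apply (continuous_ext (fun y => a0 + RInt (fun t => f (pu n t) (pv n t)) 0 (rpos y))).
      { intros y. symmetry. apply picard_S. }
      apply continuous_plus_RInt_rpos. apply C.
    + apply (continuous_ext (fun y => b0 + RInt (fun t => g (pu n t) (pv n t)) 0 (rpos y))).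
      { intros y. symmetry. apply picard_S. }
      apply continuous_plus_RInt_rpos. apply C.
Qed.

Lemma picard_gap_le (X : R) (n : nat) (x : R) : 0 <= X -> x <= X ->
  Rabs (pu (S n) x - pu n x) + Rabs (pv (S n) x - pv n x)
  <= X * (Rabs (f a0 b0) + Rabs (g a0 b0)) * ((L * rpos x) ^ n / INR (fact n)).
Proof.
  intros HX. set (B := X * (Rabs (f a0 b0) + Rabs (g a0 b0))). revert x.
  induction n as [|n IH]; intros x Hx.
  - destruct (picard_S 0 x) as [-> ->]. unfold pu, pv; simpl.
    rewrite !(RInt_const (V := R_CompleteNormedModule)). unfold scal; simpl; unfold mult; simpl.
    replace (a0 + (rpos x - 0) * f a0 b0 - a0) with (rpos x * f a0 b0) by ring.
    replace (b0 + (rpos x - 0) * g a0 b0 - b0) with (rpos x * g a0 b0) by ring.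
    rewrite !Rabs_mult, (Rabs_right (rpos x)) by (apply Rle_ge, rpos_nonneg).
    pose proof (rpos_le x X HX Hx). pose proof (rpos_nonneg x).
    pose proof (Rabs_pos (f a0 b0)). pose proof (Rabs_pos (g a0 b0)). unfold B. nra.
  - set (F m t := f (pu m t) (pv m t)). set (G m t := g (pu m t) (pv m t)).
    assert (C : forall m t, continuous (F m) t /\ continuous (G m) t)
      by (intros m t; destruct (picard_continuous m t); now apply (lipschitz2_continuous f g L)).
    assert (Diff : forall (H : nat -> R -> R) (c : R), (forall m t, continuous (H m) t) ->
              (c + RInt (H (S n)) 0 (rpos x)) - (c + RInt (H n) 0 (rpos x))
              = RInt (fun t => H (S n) t - H n t) 0 (rpos x)).
    { intros H c CH. rewrite RInt_minus_continuous; [ring|apply rpos_nonneg|split; apply CH]. }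
    destruct (picard_S (S n) x) as [-> ->]. destruct (picard_S n x) as [-> ->].
    change (fun t => f (pu (S n) t) (pv (S n) t)) with (F (S n)).
    change (fun t => f (pu n t) (pv n t)) with (F n).
    change (fun t => g (pu (S n) t) (pv (S n) t)) with (G (S n)).
    change (fun t => g (pu n t) (pv n t)) with (G n).
    rewrite (Diff F), (Diff G) by (intros; apply C).
    eapply Rle_trans;
      [apply (abs_RInt_sum_le _ _
                (fun t => L * (0 * exp (L * t) + B * ((L * t) ^ n / INR (fact n)))));
         [apply rpos_nonneg| |]|].
    + intros t _. repeat split.
      * apply (continuous_minus (F (S n)) (F n)); apply C.
      * apply (continuous_minus (G (S n)) (G n)); apply C.
      * apply (ex_derive_continuous (V := R_NormedModule)). auto_derive; auto.
    + intros t Ht. rewrite Rmult_0_l, Rplus_0_l. eapply Rle_trans; [apply Hlip|].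
      apply Rmult_le_compat_l; [lra|].
      pose proof (rpos_le x X HX Hx).
      replace (L * t) with (L * rpos t) by (now rewrite rpos_id by lra). apply IH. lra.
    + rewrite RInt_exp_pow_fact. lra.
Qed.

Lemma picard_increments_le (X : R) (n : nat) (x : R) : 0 <= X -> x <= X ->
  let a := X * (Rabs (f a0 b0) + Rabs (g a0 b0)) * ((L * X) ^ n / INR (fact n)) in
  Rabs (pu (S n) x - pu n x) <= a /\ Rabs (pv (S n) x - pv n x) <= a.
Proof.
  intros HX Hx a.
  assert (HB : 0 <= X * (Rabs (f a0 b0) + Rabs (g a0 b0)))
    by (pose proof (Rabs_pos (f a0 b0)); pose proof (Rabs_pos (g a0 b0)); apply Rmult_le_pos; lra).
  assert (X * (Rabs (f a0 b0) + Rabs (g a0 b0)) * ((L * rpos x) ^ n / INR (fact n)) <= a).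
  { apply Rmult_le_compat_l; [exact HB|].
    apply Rmult_le_compat_r; [left; apply Rinv_0_lt_compat, INR_fact_lt_0|].
    apply pow_incr. pose proof (rpos_nonneg x). pose proof (rpos_le x X HX Hx). nra. }
  pose proof (picard_gap_le X n x HX Hx).
  pose proof (Rabs_pos (pu (S n) x - pu n x)). pose proof (Rabs_pos (pv (S n) x - pv n x)).
  lra.
Qed.

Definition picard_u (x : R) : R := real (Lim_seq (fun n => pu n x)).
Definition picard_v (x : R) : R := real (Lim_seq (fun n => pv n x)).

Lemma picard_cvg (x : R) :
  is_lim_seq (fun n => pu n x) (picard_u x) /\ is_lim_seq (fun n => pv n x) (picard_v x).
Proof.
  set (B := rpos x * (Rabs (f a0 b0) + Rabs (g a0 b0))).
  assert (Ha := exp_series_Cauchy B (L * rpos x)).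
  assert (Inc := fun i => picard_increments_le (rpos x) i x (rpos_nonneg x) (Rmax_l x 0)).
  simpl in Inc. fold B in Inc.
  destruct (lim_of_summable_increments _ (fun n => pu n x) Ha) as [l1 H1];
    [intros i; apply Inc|].
  destruct (lim_of_summable_increments _ (fun n => pv n x) Ha) as [l2 H2];
    [intros i; apply Inc|].
  unfold picard_u, picard_v.
  now rewrite (is_lim_seq_unique _ _ H1), (is_lim_seq_unique _ _ H2).
Qed.

Lemma picard_uniform (X e : R) : 0 <= X -> 0 < e -> exists N, forall n x,
  (N <= n)%nat -> x <= X ->
  Rabs (picard_u x - pu n x) <= e /\ Rabs (picard_v x - pv n x) <= e.
Proof.
  intros HX He.
  destruct (lim_uniform_of_summable_increments _ e
              (exp_series_Cauchy (X * (Rabs (f a0 b0) + Rabs (g a0 b0))) (L * X)) He) as [N HN].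
  exists N. intros n x Hn Hx.
  assert (Inc := fun i => picard_increments_le X i x HX Hx). simpl in Inc.
  split; [apply (HN (fun m => pu m x))|apply (HN (fun m => pv m x))]; auto; intros i; apply Inc.
Qed.

Lemma picard_lim_continuous (x : R) : continuous picard_u x /\ continuous picard_v x.
Proof.
  assert (HX : 0 <= rpos x + 1) by (pose proof (rpos_nonneg x); lra).
  assert (Near : forall y, Rabs (y - x) < 1 -> y <= rpos x + 1)
    by (intros y Hy; apply Rabs_def2 in Hy; pose proof (Rmax_l x 0); unfold rpos; lra).
  split; [apply (continuous_of_uniform_approx _ pu)|apply (continuous_of_uniform_approx _ pv)];
    try (intros n; apply picard_continuous); intros e He;
    destruct (picard_uniform _ e HX He) as [N HN]; exists N; intros y Hy;
    apply (HN N y (le_n N) (Near y Hy)).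
Qed.

Lemma picard_integrand_continuous (h : R -> R -> R) (n : nat) (t : R) : h = f \/ h = g ->
  continuous (fun s => h (pu n s) (pv n s)) t /\
  continuous (fun s => h (picard_u s) (picard_v s)) t.
Proof.
  intros Hh. destruct (picard_continuous n t). destruct (picard_lim_continuous t).
  split; destruct Hh as [->| ->]; now apply (lipschitz2_continuous f g L).
Qed.

Lemma picard_RInt_cvg (h : R -> R -> R) (c x : R) : h = f \/ h = g -> 0 <= x ->
  is_lim_seq (fun n => c + RInt (fun t => h (pu n t) (pv n t)) 0 x)
             (c + RInt (fun t => h (picard_u t) (picard_v t)) 0 x).
Proof.
  intros Hh Hx. apply is_lim_seq_spec. intros e.
  set (e' := e / (2 * (2 * L * x + 1))).
  assert (He' : 0 < e') by (unfold e'; pose proof (cond_pos e); apply Rdiv_lt_0_compat; nra).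
  destruct (picard_uniform x e' Hx He') as [N HN]. exists N. intros n Hn.
  assert (C := fun t => picard_integrand_continuous h n t Hh).
  replace (c + RInt (fun t => h (pu n t) (pv n t)) 0 x
           - (c + RInt (fun t => h (picard_u t) (picard_v t)) 0 x))
    with (RInt (fun t => h (pu n t) (pv n t) - h (picard_u t) (picard_v t)) 0 x)
    by (rewrite RInt_minus_continuous; [simpl; ring|exact Hx|intros; apply C]).
  eapply Rle_lt_trans; [apply (abs_RInt_le_const _ 0 x (2 * L * e')); auto|].
  - apply (ex_RInt_continuous (V := R_CompleteNormedModule)). intros t _.
    apply (continuous_minus (fun s => h (pu n s) (pv n s))); apply C.
  - intros t Ht. destruct (HN n t Hn ltac:(lra)) as [H1 H2].
    rewrite Rabs_minus_sym in H1, H2.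
    pose proof (Hlip (pu n t) (pv n t) (picard_u t) (picard_v t)).
    pose proof (Rabs_pos (f (pu n t) (pv n t) - f (picard_u t) (picard_v t))).
    pose proof (Rabs_pos (g (pu n t) (pv n t) - g (picard_u t) (picard_v t))).
    destruct Hh as [->| ->]; nra.
  - assert (Hk : (x - 0) * (2 * L * e') * (2 * (2 * L * x + 1)) = (2 * L * x) * e)
      by (unfold e'; field; nra).
    pose proof (cond_pos e). assert (0 <= L * x) by nra.
    apply (Rmult_lt_reg_r (2 * (2 * L * x + 1))); [nra|]. rewrite Hk. nra.
Qed.

Lemma picard_lim_integral (x : R) : 0 <= x ->
  picard_u x = a0 + RInt (fun t => f (picard_u t) (picard_v t)) 0 x /\
  picard_v x = b0 + RInt (fun t => g (picard_u t) (picard_v t)) 0 x.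
Proof.
  intros Hx. destruct (picard_cvg x) as [Hu Hv].
  apply is_lim_seq_incr_1 in Hu. apply is_lim_seq_incr_1 in Hv.
  assert (Ext : forall n, pu (S n) x = a0 + RInt (fun t => f (pu n t) (pv n t)) 0 x /\
                         pv (S n) x = b0 + RInt (fun t => g (pu n t) (pv n t)) 0 x)
    by (intros n; destruct (picard_S n x) as [E1 E2]; rewrite rpos_id in E1, E2 by lra; auto).
  apply (is_lim_seq_ext _ _ _ (fun n => proj1 (Ext n))), is_lim_seq_unique in Hu.
  apply (is_lim_seq_ext _ _ _ (fun n => proj2 (Ext n))), is_lim_seq_unique in Hv.
  rewrite (is_lim_seq_unique _ _ (picard_RInt_cvg f a0 x (or_introl eq_refl) Hx)) in Hu.
  rewrite (is_lim_seq_unique _ _ (picard_RInt_cvg g b0 x (or_intror eq_refl) Hx)) in Hv.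
  split; [now injection Hu|now injection Hv].
Qed.

(* picard_u is constant on x < 0 and so has a corner at 0; ode_u continues it linearly
   instead, which makes it differentiable there. *)
Definition ode_u (x : R) : R := a0 + RInt (fun t => f (picard_u (rpos t)) (picard_v (rpos t))) 0 x.
Definition ode_v (x : R) : R := b0 + RInt (fun t => g (picard_u (rpos t)) (picard_v (rpos t))) 0 x.

Lemma ode_eq_picard (x : R) : 0 <= x -> ode_u x = picard_u x /\ ode_v x = picard_v x.
Proof.
  intros Hx. destruct (picard_lim_integral x Hx) as [-> ->]. unfold ode_u, ode_v.
  split; f_equal; apply RInt_ext; intros t Ht;
    rewrite Rmin_left, Rmax_right in Ht by lra; now rewrite rpos_id by lra.
Qed.

Theorem ode_solution : ode_u 0 = a0 /\ ode_v 0 = b0 /\ solves_system f g ode_u ode_v.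
Proof.
  assert (C : forall t, continuous (fun s => f (picard_u (rpos s)) (picard_v (rpos s))) t /\
                        continuous (fun s => g (picard_u (rpos s)) (picard_v (rpos s))) t).
  { intros t. destruct (picard_lim_continuous (rpos t)).
    apply (lipschitz2_continuous f g L); auto;
      apply (continuous_comp rpos); auto; apply continuous_rpos. }
  split; [|split].
  - unfold ode_u. rewrite RInt_point. unfold zero; simpl. ring.
  - unfold ode_v. rewrite RInt_point. unfold zero; simpl. ring.
  - intros x Hx. destruct (ode_eq_picard x Hx) as [-> ->]. pose proof (rpos_id x Hx) as Ex.
    split.
    + replace (f (picard_u x) (picard_v x)) with (f (picard_u (rpos x)) (picard_v (rpos x)))
        by now rewrite Ex.
      apply (is_derive_plus_RInt_0 _ (fun s => _ (picard_u (rpos s)) (picard_v (rpos s)))). apply C.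
    + replace (g (picard_u x) (picard_v x)) with (g (picard_u (rpos x)) (picard_v (rpos x)))
        by now rewrite Ex.
      apply (is_derive_plus_RInt_0 _ (fun s => _ (picard_u (rpos s)) (picard_v (rpos s)))). apply C.
Qed.

End Picard.

(** * Gronwall's inequality *)

Lemma gronwall (D : R -> R) (A L X : R) : 0 <= A -> 0 <= L ->
  (forall t, 0 <= t <= X -> continuous D t) ->
  (forall x, 0 <= x <= X -> D x <= A + L * RInt D 0 x) ->
  forall x, 0 <= x <= X -> D x <= A * exp (L * x).
Proof.
  intros HA HL CD HD x Hx.
  destruct (continuity_ab_maj D 0 X ltac:(lra)) as [xm [Hxm _]].
  { intros t Ht. now apply continuity_pt_filterlim, CD. }
  set (B := D xm).
  set (bound n t := A * exp (L * t) + B * ((L * t) ^ n / INR (fact n))).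
  assert (Cb : forall n t, continuous (bound n) t)
    by (intros n t; apply (ex_derive_continuous (V := R_NormedModule));
        unfold bound; auto_derive; auto).
  assert (ExD : forall y, 0 <= y <= X -> ex_RInt D 0 y)
    by (intros y Hy; apply (ex_RInt_continuous (V := R_CompleteNormedModule));
        rewrite Rmin_left, Rmax_right by lra; intros; apply CD; lra).
  assert (Iter : forall n y, 0 <= y <= X -> D y <= bound n y).
  { induction n as [|n IH]; intros y Hy.
    - unfold bound. simpl. pose proof (Hxm y Hy) as HB. pose proof (exp_pos (L * y)).
      fold B in HB. nra.
    - assert (Exb : ex_RInt (bound n) 0 y)
        by (apply (ex_RInt_continuous (V := R_CompleteNormedModule)); intros; apply Cb).
      assert (RInt D 0 y <= RInt (bound n) 0 y)
        by (apply RInt_le; [lra|now apply ExD|exact Exb|intros; apply IH; lra]).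
      assert (E : L * RInt (bound n) 0 y
                  = A * (exp (L * y) - 1) + B * ((L * y) ^ S n / INR (fact (S n)))).
      { rewrite <- RInt_exp_pow_fact. symmetry.
        exact (RInt_scal (V := R_CompleteNormedModule) (bound n) 0 y L Exb). }
      eapply Rle_trans; [apply HD; exact Hy|]. unfold bound. nra. }
  assert (Lim : is_lim_seq (fun n => bound n x) (A * exp (L * x) + B * 0)).
  { apply is_lim_seq_plus'; [apply is_lim_seq_const|].
    apply (is_lim_seq_scal_l _ B 0), is_lim_seq_Reals, cv_speed_pow_fact. }
  rewrite Rmult_0_r, Rplus_0_r in Lim.
  apply (is_lim_seq_le (fun _ => D x) (fun n => bound n x) (D x) (A * exp (L * x))); auto.
  apply is_lim_seq_const.
Qed.

Lemma solves_system_continuous (f g : R -> R -> R) (L : R) (u v : R -> R) (t : R) :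
  0 < L -> lipschitz2 f g L -> solves_system f g u v -> 0 <= t ->
  continuous u t /\ continuous v t /\
  continuous (fun s => f (u s) (v s)) t /\ continuous (fun s => g (u s) (v s)) t.
Proof.
  intros HL Hlip Hsol Ht. destruct (Hsol t Ht) as [Du Dv].
  assert (Cu := continuous_of_is_derive _ _ _ Du). assert (Cv := continuous_of_is_derive _ _ _ Dv).
  destruct (lipschitz2_continuous f g L u v t HL Hlip Cu Cv). tauto.
Qed.

Lemma solves_system_integral (f g : R -> R -> R) (L : R) (u v : R -> R) (x : R) :
  0 < L -> lipschitz2 f g L -> solves_system f g u v -> 0 <= x ->
  u x = u 0 + RInt (fun t => f (u t) (v t)) 0 x /\
  v x = v 0 + RInt (fun t => g (u t) (v t)) 0 x.
Proof.
  intros HL Hlip Hsol Hx.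
  assert (C := fun t (Ht : Rmin 0 x <= t <= Rmax 0 x) =>
    solves_system_continuous f g L u v t HL Hlip Hsol
      ltac:(rewrite Rmin_left in Ht by lra; lra)).
  assert (D : forall t, Rmin 0 x <= t <= Rmax 0 x -> 0 <= t)
    by (intros t Ht; rewrite Rmin_left in Ht by lra; lra).
  split.
  - rewrite (is_RInt_unique _ _ _ _ (is_RInt_derive (V := R_CompleteNormedModule) u
      (fun t => f (u t) (v t)) 0 x (fun t Ht => proj1 (Hsol t (D t Ht)))
      (fun t Ht => proj1 (proj2 (proj2 (C t Ht)))))).
    unfold minus, plus, opp; simpl. ring.
  - rewrite (is_RInt_unique _ _ _ _ (is_RInt_derive (V := R_CompleteNormedModule) v
      (fun t => g (u t) (v t)) 0 x (fun t Ht => proj2 (Hsol t (D t Ht)))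
      (fun t Ht => proj2 (proj2 (proj2 (C t Ht)))))).
    unfold minus, plus, opp; simpl. ring.
Qed.

Section SolutionsGap.

Variables (f1 g1 f2 g2 : R -> R -> R) (L E X : R) (u1 v1 u2 v2 : R -> R).
Hypotheses (HL : 0 < L) (Hl1 : lipschitz2 f1 g1 L) (Hl2 : lipschitz2 f2 g2 L) (HE : 0 <= E)
  (S1 : solves_system f1 g1 u1 v1) (S2 : solves_system f2 g2 u2 v2)
  (HEb : forall t, 0 <= t <= X ->
     Rabs (f1 (u2 t) (v2 t) - f2 (u2 t) (v2 t)) + Rabs (g1 (u2 t) (v2 t) - g2 (u2 t) (v2 t)) <= E).

Let gap (t : R) : R := Rabs (u1 t - u2 t) + Rabs (v1 t - v2 t).

Let C1 t := solves_system_continuous f1 g1 L u1 v1 t HL Hl1 S1.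
Let C2 t := solves_system_continuous f2 g2 L u2 v2 t HL Hl2 S2.

Lemma cross_integrand_continuous (t : R) : 0 <= t ->
  continuous (fun s => f1 (u2 s) (v2 s)) t /\ continuous (fun s => g1 (u2 s) (v2 s)) t.
Proof.
  intros Ht. destruct (C2 t Ht) as [Cu [Cv _]]. now apply (lipschitz2_continuous f1 g1 L).
Qed.

Lemma gap_continuous (t : R) : 0 <= t -> continuous gap t.
Proof.
  intros Ht. destruct (C1 t Ht) as [Cu1 [Cv1 _]]. destruct (C2 t Ht) as [Cu2 [Cv2 _]].
  apply (continuous_plus (fun s => Rabs (u1 s - u2 s)) (fun s => Rabs (v1 s - v2 s)));
    apply continuous_Rabs_comp; now apply (continuous_minus (V := R_NormedModule)).
Qed.

Lemma gap_lipschitz_part_le (y : R) : 0 <= y ->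
  Rabs (RInt (fun t => f1 (u1 t) (v1 t) - f1 (u2 t) (v2 t)) 0 y)
  + Rabs (RInt (fun t => g1 (u1 t) (v1 t) - g1 (u2 t) (v2 t)) 0 y) <= L * RInt gap 0 y.
Proof.
  intros Hy. rewrite <- (RInt_scal (V := R_CompleteNormedModule)).
  2:{ apply (ex_RInt_continuous (V := R_CompleteNormedModule)).
      rewrite Rmin_left, Rmax_right by lra. intros t Ht. apply gap_continuous. lra. }
  apply abs_RInt_sum_le; [lra| |intros t Ht; apply Hl1].
  intros t Ht. destruct (C1 t ltac:(lra)) as [_ [_ [Cf1 Cg1]]].
  destruct (cross_integrand_continuous t ltac:(lra)) as [Cf12 Cg12]. repeat split.
  - now apply (continuous_minus (V := R_NormedModule)).
  - now apply (continuous_minus (V := R_NormedModule)).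
  - apply (continuous_scal_r (K := R_AbsRing) (V := R_NormedModule) L gap).
    apply gap_continuous. lra.
Qed.

Lemma gap_perturbation_part_le (y : R) : 0 <= y <= X ->
  Rabs (RInt (fun t => f1 (u2 t) (v2 t) - f2 (u2 t) (v2 t)) 0 y)
  + Rabs (RInt (fun t => g1 (u2 t) (v2 t) - g2 (u2 t) (v2 t)) 0 y) <= E * X.
Proof.
  intros Hy. eapply Rle_trans; [apply (abs_RInt_sum_le _ _ (fun _ => E)); [lra| |]|].
  - intros t Ht. destruct (C2 t ltac:(lra)) as [_ [_ [Cf2 Cg2]]].
    destruct (cross_integrand_continuous t ltac:(lra)) as [Cf12 Cg12]. repeat split.
    + now apply (continuous_minus (V := R_NormedModule)).
    + now apply (continuous_minus (V := R_NormedModule)).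
    + apply continuous_const.
  - intros t Ht. apply HEb. lra.
  - rewrite (RInt_const (V := R_CompleteNormedModule)). unfold scal; simpl; unfold mult; simpl.
    nra.
Qed.

Lemma gap_integral_le (y : R) : 0 <= y <= X -> gap y <= gap 0 + E * X + L * RInt gap 0 y.
Proof.
  intros Hy.
  destruct (solves_system_integral f1 g1 L u1 v1 y HL Hl1 S1 ltac:(lra)) as [I1 J1].
  destruct (solves_system_integral f2 g2 L u2 v2 y HL Hl2 S2 ltac:(lra)) as [I2 J2].
  set (k1 := RInt (fun t => f1 (u1 t) (v1 t) - f1 (u2 t) (v2 t)) 0 y).
  set (k2 := RInt (fun t => g1 (u1 t) (v1 t) - g1 (u2 t) (v2 t)) 0 y).
  set (m1 := RInt (fun t => f1 (u2 t) (v2 t) - f2 (u2 t) (v2 t)) 0 y).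
  set (m2 := RInt (fun t => g1 (u2 t) (v2 t) - g2 (u2 t) (v2 t)) 0 y).
  assert (C : forall t, 0 <= t <= y ->
    continuous (fun s => f1 (u1 s) (v1 s)) t /\ continuous (fun s => g1 (u1 s) (v1 s)) t /\
    continuous (fun s => f1 (u2 s) (v2 s)) t /\ continuous (fun s => g1 (u2 s) (v2 s)) t /\
    continuous (fun s => f2 (u2 s) (v2 s)) t /\ continuous (fun s => g2 (u2 s) (v2 s)) t).
  { intros t Ht. destruct (C1 t ltac:(lra)) as [_ [_ [? ?]]].
    destruct (C2 t ltac:(lra)) as [_ [_ [? ?]]].
    destruct (cross_integrand_continuous t ltac:(lra)). tauto. }
  assert (Eu : u1 y - u2 y = (u1 0 - u2 0) + k1 + m1).
  { rewrite I1, I2. unfold k1, m1.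
    rewrite !RInt_minus_continuous by (lra || (intros t Ht; split; apply C; exact Ht)). ring. }
  assert (Ev : v1 y - v2 y = (v1 0 - v2 0) + k2 + m2).
  { rewrite J1, J2. unfold k2, m2.
    rewrite !RInt_minus_continuous by (lra || (intros t Ht; split; apply C; exact Ht)). ring. }
  pose proof (gap_lipschitz_part_le y ltac:(lra)) as Hk. fold k1 k2 in Hk.
  pose proof (gap_perturbation_part_le y Hy) as Hm. fold m1 m2 in Hm.
  unfold gap at 1 2. rewrite Eu, Ev.
  pose proof (Rabs_triang (u1 0 - u2 0 + k1) m1). pose proof (Rabs_triang (u1 0 - u2 0) k1).
  pose proof (Rabs_triang (v1 0 - v2 0 + k2) m2). pose proof (Rabs_triang (v1 0 - v2 0) k2).
  lra.
Qed.

Lemma solutions_gap_le (x : R) : 0 <= x <= X ->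
  Rabs (u1 x - u2 x) + Rabs (v1 x - v2 x)
  <= (Rabs (u1 0 - u2 0) + Rabs (v1 0 - v2 0) + E * X) * exp (L * X).
Proof.
  intros Hx.
  assert (HA : 0 <= gap 0 + E * X)
    by (pose proof (Rabs_pos (u1 0 - u2 0)); pose proof (Rabs_pos (v1 0 - v2 0)); unfold gap; nra).
  eapply Rle_trans.
  - apply (gronwall gap (gap 0 + E * X) L X); auto; try lra; [|apply gap_integral_le].
    intros t Ht. apply gap_continuous. lra.
  - apply Rmult_le_compat_l; [exact HA|]. apply exp_le_compat. nra.
Qed.

End SolutionsGap.

(** * Shooting *)

Lemma interval_not_covered_by_disjoint_opens (lo hi : R) (U O : R -> Prop) :
  lo < hi -> O lo -> U hi -> (forall c, U c -> O c -> False) ->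
  (forall c0, lo <= c0 <= hi -> U c0 -> exists d, 0 < d /\
     forall c, lo <= c <= hi -> Rabs (c - c0) < d -> U c) ->
  (forall c0, lo <= c0 <= hi -> O c0 -> exists d, 0 < d /\
     forall c, lo <= c <= hi -> Rabs (c - c0) < d -> O c) ->
  exists c, lo <= c <= hi /\ ~ U c /\ ~ O c.
Proof.
  intros Hlh Olo Uhi Hdis oU oO.
  set (E c := lo <= c <= hi /\ forall c', lo <= c' <= c -> O c').
  assert (Elo : E lo) by (split; [lra|intros c' Hc'; now replace c' with lo by lra]).
  destruct (completeness E) as [m [Hub Hlub]];
    [exists hi; intros c [Hc _]; lra|now exists lo|].
  assert (Hm : lo <= m <= hi) by (split; [now apply Hub|apply Hlub; intros c [Hc _]; lra]).
  assert (Obelow : forall c', lo <= c' < m -> O c').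
  { intros c' Hc'. destruct (classic (exists e, E e /\ c' < e)) as [[e [[_ He] Hlt]]|Hn].
    - apply He. lra.
    - exfalso. assert (m <= c'); [|lra]. apply Hlub. intros e He.
      apply Rnot_lt_le. intros Hlt. apply Hn. now exists e. }
  exists m. split; [exact Hm|]. split.
  - intros Um. destruct (Req_dec m lo) as [->|Hne]; [now apply (Hdis lo)|].
    destruct (oU m Hm Um) as [d [Hd HUd]].
    set (c' := Rmax (m - d / 2) lo).
    assert (lo <= c' < m) by (unfold c', Rmax; destruct Rle_dec; lra).
    apply (Hdis c'); [|apply Obelow; lra]. apply HUd; [lra|].
    unfold c', Rmax; destruct Rle_dec; rewrite Rabs_left; lra.
  - intros Om. destruct (oO m Hm Om) as [d [Hd HOd]].
    set (c2 := Rmin (m + d / 2) hi).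
    assert (Ec2 : E c2).
    { split; [unfold c2, Rmin; destruct Rle_dec; lra|].
      intros c' Hc'. destruct (Rlt_le_dec c' m); [apply Obelow; lra|].
      apply HOd; unfold c2, Rmin in Hc'; destruct Rle_dec in Hc'; [lra|lra| |];
        rewrite Rabs_right; lra. }
    pose proof (Hub c2 Ec2) as Hc2.
    assert (m = hi) by (unfold c2, Rmin in Hc2; destruct Rle_dec in Hc2; lra).
    subst m. now apply (Hdis hi).
Qed.

Lemma nonneg_of_pos_before (r : R -> R) (s : R) : continuous r s -> 0 < s ->
  (forall x, 0 <= x < s -> 0 < r x) -> 0 <= r s.
Proof.
  intros Cr Hs Hpos. apply Rnot_lt_le. intros Hlt.
  destruct (continuous_lt_near r s 0 Cr Hlt) as [d [Hd Hneg]].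
  set (x := s - Rmin d s / 2).
  assert (Hx : 0 <= x < s /\ Rabs (x - s) < d)
    by (unfold x; pose proof (Rmin_l d s); pose proof (Rmin_r d s);
        pose proof (Rmin_pos d s Hd Hs); split; [lra|rewrite Rabs_left; lra]).
  specialize (Hneg x (proj2 Hx)). specialize (Hpos x (proj1 Hx)). lra.
Qed.

Lemma first_exit (p q : R -> R) (x1 : R) :
  (forall x, 0 <= x -> continuous p x /\ continuous q x) -> 0 < p 0 -> 0 < q 0 ->
  0 <= x1 -> p x1 <= 0 \/ q x1 <= 0 ->
  exists s, 0 < s /\ (forall x, 0 <= x < s -> 0 < p x /\ 0 < q x) /\
    0 <= p s /\ 0 <= q s /\ (p s = 0 \/ q s = 0).
Proof.
  intros C Hp0 Hq0 Hx1 Hexit.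
  set (E y := 0 <= y /\ forall x, 0 <= x <= y -> 0 < p x /\ 0 < q x).
  assert (E0 : E 0) by (split; [lra|intros x Hx; now replace x with 0 by lra]).
  destruct (completeness E) as [s [Hub Hlub]]; [|now exists 0|].
  { exists x1. intros y [Hy HE]. apply Rnot_lt_le. intros Hlt.
    destruct (HE x1 ltac:(lra)). lra. }
  assert (Hs0 : 0 <= s) by now apply Hub.
  assert (Good : forall x, 0 <= x < s -> 0 < p x /\ 0 < q x).
  { intros x Hx. destruct (classic (exists y, E y /\ x < y)) as [[y [[_ Hy] Hlt]]|Hn].
    - apply Hy. lra.
    - exfalso. assert (s <= x); [|lra]. apply Hlub. intros y Hy.
      apply Rnot_lt_le. intros Hlt. apply Hn. now exists y. }
  destruct (C s Hs0) as [Cp Cq].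
  assert (Open : 0 < p s -> 0 < q s -> False).
  { intros Hp Hq.
    destruct (continuous_lt_near (fun x => - p x) s 0 (continuous_opp _ _ Cp) ltac:(lra))
      as [d1 [Hd1 H1]].
    destruct (continuous_lt_near (fun x => - q x) s 0 (continuous_opp _ _ Cq) ltac:(lra))
      as [d2 [Hd2 H2]].
    set (h := Rmin d1 d2 / 2).
    assert (Hh : 0 < h /\ h < d1 /\ h < d2)
      by (unfold h; pose proof (Rmin_l d1 d2); pose proof (Rmin_r d1 d2);
          pose proof (Rmin_pos d1 d2 Hd1 Hd2); lra).
    assert (Esh : E (s + h)); [|pose proof (Hub _ Esh); lra].
    split; [lra|]. intros x Hx. destruct (Rlt_le_dec x s); [apply Good; lra|].
    assert (Hxs : Rabs (x - s) < d1 /\ Rabs (x - s) < d2) by (rewrite Rabs_right; lra).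
    specialize (H1 x (proj1 Hxs)). specialize (H2 x (proj2 Hxs)). simpl in H1, H2. lra. }
  assert (Hs : 0 < s) by (destruct Hs0 as [|<-]; auto; exfalso; now apply Open).
  assert (Hps : 0 <= p s) by (apply nonneg_of_pos_before; auto; intros x Hx; apply Good, Hx).
  assert (Hqs : 0 <= q s) by (apply nonneg_of_pos_before; auto; intros x Hx; apply Good, Hx).
  exists s. split; [exact Hs|]. split; [exact Good|]. split; [exact Hps|]. split; [exact Hqs|].
  destruct (Req_dec (p s) 0); [now left|]. destruct (Req_dec (q s) 0); [now right|].
  exfalso. apply Open; lra.
Qed.

Record shooting_family (lo hi K : R) (a P : R -> R) (u v : R -> R -> R) : Prop := {
  sf_lt : lo < hi;
  sf_P_pos : forall t, t < 1 -> 0 < P t;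
  sf_P_le : forall t, t <= 1 -> P t <= K * (1 - t);
  sf_a_nonneg : forall c, lo <= c <= hi -> 0 <= a c;
  sf_solves : forall c, lo <= c <= hi ->
    solves_system (fun _ w => w) (fun z w => a c * w - P z) (u c) (v c);
  sf_below_one : forall c, lo < c <= hi -> u c 0 < 1;
  sf_at_lo : u lo 0 = 1 /\ 0 < v lo 0;
  sf_at_hi : v hi 0 = 0;
  sf_dependence : forall c0 X e, lo <= c0 <= hi -> 0 <= X -> 0 < e -> exists d, 0 < d /\
    forall c, lo <= c <= hi -> Rabs (c - c0) < d ->
    forall x, 0 <= x <= X -> Rabs (u c x - u c0 x) + Rabs (v c x - v c0 x) < e
}.
Arguments sf_lt {lo hi K a P u v}.
Arguments sf_P_pos {lo hi K a P u v}.
Arguments sf_P_le {lo hi K a P u v}.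
Arguments sf_a_nonneg {lo hi K a P u v}.
Arguments sf_solves {lo hi K a P u v}.
Arguments sf_below_one {lo hi K a P u v}.
Arguments sf_at_lo {lo hi K a P u v}.
Arguments sf_at_hi {lo hi K a P u v}.
Arguments sf_dependence {lo hi K a P u v}.

Section Shooting.

Variables (lo hi K : R) (a P : R -> R) (u v : R -> R -> R).
Hypothesis HF : shooting_family lo hi K a P u v.

Definition undershoots (c : R) : Prop :=
  exists x1, 0 <= x1 /\ v c x1 < 0 /\ forall x, 0 <= x <= x1 -> u c x < 1.

Definition overshoots (c : R) : Prop :=
  exists x1, 0 <= x1 /\ 1 < u c x1 /\ forall x, 0 <= x <= x1 -> 0 < v c x.

Lemma family_continuous (c x : R) : lo <= c <= hi -> 0 <= x ->
  continuous (u c) x /\ continuous (v c) x.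
Proof.
  intros Hc Hx. destruct (sf_solves HF c Hc x Hx) as [Du Dv].
  split; eapply continuous_of_is_derive; eauto.
Qed.

Lemma undershoots_of_v_zero (c x0 : R) : lo <= c <= hi -> 0 <= x0 ->
  (forall x, 0 <= x <= x0 -> u c x < 1) -> v c x0 = 0 -> undershoots c.
Proof.
  intros Hc Hx0 Hu Hv. destruct (sf_solves HF c Hc x0 Hx0) as [_ Dv].
  assert (Hneg : 0 < - (a c * v c x0 - P (u c x0))).
  { rewrite Hv. pose proof (sf_P_pos HF (u c x0) (Hu x0 ltac:(lra))). lra. }
  destruct (lt_right_of_derive_pos _ _ _ (is_derive_opp (v c) x0 _ Dv) Hneg) as [d1 [Hd1 H1]].
  destruct (continuous_lt_near (u c) x0 1 (proj1 (family_continuous c x0 Hc Hx0))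
              (Hu x0 ltac:(lra))) as [d2 [Hd2 H2]].
  set (h := Rmin d1 d2 / 2).
  assert (0 < h /\ h < d1 /\ h < d2)
    by (unfold h; pose proof (Rmin_l d1 d2); pose proof (Rmin_r d1 d2);
        pose proof (Rmin_pos d1 d2 Hd1 Hd2); lra).
  exists (x0 + h). split; [lra|]. split.
  - specialize (H1 h ltac:(lra)). unfold opp in H1; simpl in H1. lra.
  - intros x Hx. destruct (Rle_dec x x0); [apply Hu; lra|].
    apply H2. rewrite Rabs_right; lra.
Qed.

Lemma overshoots_of_u_one (c x0 : R) : lo <= c <= hi -> 0 <= x0 ->
  (forall x, 0 <= x <= x0 -> 0 < v c x) -> u c x0 = 1 -> overshoots c.
Proof.
  intros Hc Hx0 Hv Hu. destruct (sf_solves HF c Hc x0 Hx0) as [Du _].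
  destruct (lt_right_of_derive_pos _ _ _ Du (Hv x0 ltac:(lra))) as [d1 [Hd1 H1]].
  destruct (continuous_lt_near (fun x => - v c x) x0 0
              (continuous_opp _ _ (proj2 (family_continuous c x0 Hc Hx0)))
              ltac:(pose proof (Hv x0 ltac:(lra)); lra)) as [d2 [Hd2 H2]].
  set (h := Rmin d1 d2 / 2).
  assert (0 < h /\ h < d1 /\ h < d2)
    by (unfold h; pose proof (Rmin_l d1 d2); pose proof (Rmin_r d1 d2);
        pose proof (Rmin_pos d1 d2 Hd1 Hd2); lra).
  exists (x0 + h). split; [lra|]. split; [rewrite <- Hu; apply H1; lra|].
  intros x Hx. destruct (Rle_dec x x0); [apply Hv; lra|].
  assert (- v c x < 0) by (apply H2; rewrite Rabs_right; lra). lra.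
Qed.

Lemma not_undershoots_and_overshoots (c : R) : undershoots c -> overshoots c -> False.
Proof.
  intros [x1 [H1 [H2 H3]]] [x2 [G1 [G2 G3]]].
  destruct (Rle_dec x1 x2).
  - pose proof (G3 x1 ltac:(lra)). lra.
  - pose proof (H3 x2 ltac:(lra)). lra.
Qed.

Lemma undershoots_open (c0 : R) : lo <= c0 <= hi -> undershoots c0 ->
  exists d, 0 < d /\ forall c, lo <= c <= hi -> Rabs (c - c0) < d -> undershoots c.
Proof.
  intros Hc0 [x1 [H1 [H2 H3]]].
  destruct (continuity_ab_maj (u c0) 0 x1 H1) as [M [HMx HMr]].
  { intros x Hx. apply continuity_pt_filterlim, (family_continuous c0 x Hc0). lra. }
  assert (HM1 : u c0 M < 1) by auto.
  set (e := Rmin (1 - u c0 M) (- v c0 x1)).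
  assert (He : 0 < e) by (unfold e; apply Rmin_pos; lra).
  assert (He1 : e <= 1 - u c0 M) by apply Rmin_l.
  assert (He2 : e <= - v c0 x1) by apply Rmin_r.
  destruct (sf_dependence HF c0 x1 e Hc0 H1 He) as [d [Hd Hd']].
  exists d. split; auto. intros c Hc Hcd. exists x1. split; auto. split.
  - specialize (Hd' c Hc Hcd x1 ltac:(lra)). pose proof (Rabs_pos (u c x1 - u c0 x1)).
    assert (Hv : Rabs (v c x1 - v c0 x1) < e) by lra. apply Rabs_def2 in Hv. lra.
  - intros x Hx. specialize (Hd' c Hc Hcd x Hx). pose proof (Rabs_pos (v c x - v c0 x)).
    assert (Hu : Rabs (u c x - u c0 x) < e) by lra. apply Rabs_def2 in Hu.
    pose proof (HMx x Hx). lra.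
Qed.

Lemma overshoots_open (c0 : R) : lo <= c0 <= hi -> overshoots c0 ->
  exists d, 0 < d /\ forall c, lo <= c <= hi -> Rabs (c - c0) < d -> overshoots c.
Proof.
  intros Hc0 [x1 [H1 [H2 H3]]].
  destruct (continuity_ab_min (v c0) 0 x1 H1) as [M [HMx HMr]].
  { intros x Hx. apply continuity_pt_filterlim, (family_continuous c0 x Hc0). lra. }
  assert (HM1 : 0 < v c0 M) by auto.
  set (e := Rmin (v c0 M) (u c0 x1 - 1)).
  assert (He : 0 < e) by (unfold e; apply Rmin_pos; lra).
  assert (He1 : e <= v c0 M) by apply Rmin_l.
  assert (He2 : e <= u c0 x1 - 1) by apply Rmin_r.
  destruct (sf_dependence HF c0 x1 e Hc0 H1 He) as [d [Hd Hd']].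
  exists d. split; auto. intros c Hc Hcd. exists x1. split; auto. split.
  - specialize (Hd' c Hc Hcd x1 ltac:(lra)). pose proof (Rabs_pos (v c x1 - v c0 x1)).
    assert (Hu : Rabs (u c x1 - u c0 x1) < e) by lra. apply Rabs_def2 in Hu. lra.
  - intros x Hx. specialize (Hd' c Hc Hcd x Hx). pose proof (Rabs_pos (u c x - u c0 x)).
    assert (Hv : Rabs (v c x - v c0 x) < e) by lra. apply Rabs_def2 in Hv.
    pose proof (HMx x Hx). lra.
Qed.

Lemma family_K_pos : 0 < K.
Proof.
  pose proof (sf_P_pos HF 0 ltac:(lra)).
  pose proof (sf_P_le HF 0 ltac:(lra)). lra.
Qed.

Lemma trajectory_avoids_rest (c s : R) : lo <= c <= hi -> 0 <= s -> 0 < v c 0 ->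
  (forall x, 0 <= x <= s -> 0 <= v c x /\ u c x <= 1) -> u c s = 1 -> v c s = 0 -> False.
Proof.
  intros Hc Hs Hv0 Hinv Hus Hvs.
  assert (HPK := sf_P_le HF). assert (Ha := sf_a_nonneg HF c Hc).
  set (phi y := (1 - u c y + v c y) * exp ((1 + K) * y)).
  assert (phi 0 <= phi s); [|unfold phi in *; rewrite Hus, Hvs, Rmult_0_r, exp_0 in *;
                              destruct (Hinv 0 ltac:(lra)); lra].
  apply (le_of_derive_nonneg phi
    (fun y => (- v c y + (a c * v c y - P (u c y)) + (1 + K) * (1 - u c y + v c y))
              * exp ((1 + K) * y))); [lra| |].
  - intros y Hy. apply (is_derive_mul_exp (fun y => 1 - u c y + v c y)).
    destruct (sf_solves HF c Hc y ltac:(lra)) as [Du Dv].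
    auto_derive; [split; [now exists (v c y)|split; [now exists (a c * v c y - P (u c y))|auto]]|].
    replace (Derive (fun y => u c y) y) with (v c y) by (symmetry; now apply is_derive_unique).
    replace (Derive (fun y => v c y) y) with (a c * v c y - P (u c y))
      by (symmetry; now apply is_derive_unique).
    ring.
  - intros y Hy. apply Rmult_le_pos; [|left; apply exp_pos].
    destruct (Hinv y Hy). pose proof (HPK (u c y) ltac:(lra)). pose proof family_K_pos. nra.
Qed.

Lemma trapped_of_neither (c : R) : lo < c <= hi -> ~ undershoots c -> ~ overshoots c ->
  forall x, 0 <= x -> 0 < v c x /\ u c x < 1.
Proof.
  intros Hc NU NO. assert (Hc' : lo <= c <= hi) by lra.
  assert (Hu0 := sf_below_one HF c Hc).
  assert (Hv0 : 0 < v c 0).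
  { destruct (Rtotal_order (v c 0) 0) as [Hlt|[Heq|Hgt]]; auto; exfalso; apply NU.
    - exists 0. repeat split; auto; [lra|]. intros x Hx. now replace x with 0 by lra.
    - apply (undershoots_of_v_zero c 0); auto; [lra|]. intros x Hx. now replace x with 0 by lra. }
  apply NNPP. intros Hn. apply not_all_ex_not in Hn. destruct Hn as [x1 Hn].
  apply imply_to_and in Hn. destruct Hn as [Hx1 Hbad].
  assert (C : forall x, 0 <= x -> continuous (v c) x /\ continuous (fun x => 1 - u c x) x).
  { intros x Hx. destruct (family_continuous c x Hc' Hx). split; auto.
    apply (continuous_minus (fun _ => 1) (u c)); auto. apply continuous_const. }
  assert (Exit : v c x1 <= 0 \/ 1 - u c x1 <= 0).
  { destruct (Rle_lt_dec (v c x1) 0); [now left|right].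
    apply Rnot_lt_le. intros H. apply Hbad. split; lra. }
  destruct (first_exit (v c) (fun x => 1 - u c x) x1 C Hv0 ltac:(lra) Hx1 Exit)
    as [s [Hs [Good [Hvs [Hus Hzero]]]]].
  simpl in *.
  assert (Inv : forall x, 0 <= x <= s -> 0 <= v c x /\ u c x <= 1).
  { intros x Hx. destruct (Rlt_le_dec x s) as [Hlt|Hge]; [destruct (Good x); lra|].
    replace x with s by lra. lra. }
  destruct (Req_dec (v c s) 0) as [Hv|Hv].
  - destruct (Req_dec (u c s) 1) as [Hu|Hu].
    + apply (trajectory_avoids_rest c s); auto; lra.
    + apply NU, (undershoots_of_v_zero c s); auto; [lra|].
      intros x Hx. destruct (Rlt_le_dec x s) as [Hlt|Hge]; [destruct (Good x); lra|].
      replace x with s by lra. lra.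
  - apply NO, (overshoots_of_u_one c s); auto; [lra| |lra].
    intros x Hx. destruct (Rlt_le_dec x s) as [Hlt|Hge]; [destruct (Good x); lra|].
    replace x with s by lra. lra.
Qed.

Theorem exists_trapped_trajectory :
  exists c, lo < c < hi /\ forall x, 0 <= x -> 0 < v c x /\ u c x < 1.
Proof.
  assert (Hlh := sf_lt HF).
  destruct (sf_at_lo HF) as [Hulo Hvlo].
  assert (Olo : overshoots lo).
  { apply (overshoots_of_u_one lo 0); [lra|lra| |exact Hulo].
    intros x Hx. now replace x with 0 by lra. }
  assert (Uhi : undershoots hi).
  { apply (undershoots_of_v_zero hi 0); [lra|lra| |exact (sf_at_hi HF)].
    intros x Hx. replace x with 0 by lra. apply (sf_below_one HF). lra. }
  destruct (interval_not_covered_by_disjoint_opens lo hi undershoots overshoots Hlh Olo Uhi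
              not_undershoots_and_overshoots undershoots_open overshoots_open)
    as [c [Hc [NU NO]]].
  assert (Hc' : lo < c < hi).
  { destruct (Req_dec c lo) as [->|]; [contradiction|].
    destruct (Req_dec c hi) as [->|]; [contradiction|]. lra. }
  exists c. split; auto. apply trapped_of_neither; auto; lra.
Qed.

End Shooting.

(** * Trapped trajectories *)

Section Trapped.

Variables (a K : R) (P u v : R -> R).
Hypotheses (Ha : 0 < a) (HPc : forall t, continuous P t) (HPpos : forall t, t < 1 -> 0 < P t)
  (HPK : forall t, t <= 1 -> P t <= K * (1 - t))
  (Hsol : solves_system (fun _ w => w) (fun z w => a * w - P z) u v)
  (Hu0 : 0 <= u 0) (Htrap : forall x, 0 <= x -> 0 < v x /\ u x < 1).

Lemma trapped_u_le (x y : R) : 0 <= x <= y -> u x <= u y.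
Proof.
  intros Hxy. apply (le_of_derive_nonneg u v); [lra| |].
  - intros z Hz. apply Hsol. lra.
  - intros z Hz. left. apply Htrap. lra.
Qed.

Lemma trapped_u_linear_growth (x y b : R) : 0 <= x <= y -> (forall z, x <= z <= y -> b <= v z) ->
  u x + b * (y - x) <= u y.
Proof.
  intros Hxy Hb. apply (le_of_derive_ge u v); auto; [lra|]. intros z Hz. apply Hsol. lra.
Qed.

Lemma trapped_v_not_eventually_ge (b x0 : R) : 0 < b -> 0 <= x0 ->
  ~ (forall x, x0 <= x -> b <= v x).
Proof.
  intros Hb Hx0 Hv. set (y := x0 + 2 / b).
  assert (Hy : 0 < 2 / b) by (apply Rdiv_lt_0_compat; lra).
  pose proof (trapped_u_linear_growth x0 y b ltac:(unfold y; lra)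
                ltac:(intros; apply Hv; lra)) as Hgrow.
  replace (b * (y - x0)) with 2 in Hgrow by (unfold y; field; lra).
  pose proof (trapped_u_le 0 x0 ltac:(lra)). pose proof (Htrap y ltac:(unfold y; lra)). lra.
Qed.

Lemma trapped_u_cvg : filterlim u (Rbar_locally p_infty) (locally 1).
Proof.
  apply filterlim_p_infty_R_iff. intros e He.
  destruct (classic (exists x0, 0 <= x0 /\ 1 - e < u x0)) as [[x0 [Hx0 Hux0]]|Hn].
  { exists x0. intros x Hx. pose proof (trapped_u_le x0 x ltac:(lra)).
    pose proof (Htrap x ltac:(lra)). rewrite Rabs_left; lra. }
  exfalso.
  assert (Hle : forall x, 0 <= x -> u x <= 1 - e)
    by (intros x Hx; apply Rnot_lt_le; intros Hlt; apply Hn; now exists x).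
  destruct (continuity_ab_min P (u 0) (1 - e)) as [t0 [Ht0 Ht0r]].
  { apply Hle. lra. }
  { intros t _. apply continuity_pt_filterlim, HPc. }
  set (m := P t0). assert (Hm : 0 < m) by (apply HPpos; lra).
  assert (HPm : forall x, 0 <= x -> m <= P (u x))
    by (intros x Hx; apply Ht0; split; [apply trapped_u_le; lra|now apply Hle]).
  (* Now v' <= a (v - m / a): once below m / a, v is driven exponentially below 0. *)
  destruct (classic (exists x0, 0 <= x0 /\ v x0 < m / a)) as [[x0 [Hx0 Hvx0]]|Hn2].
  2:{ apply (trapped_v_not_eventually_ge (m / a) 0); [apply Rdiv_lt_0_compat; lra|lra|].
      intros x Hx. apply Rnot_lt_le. intros Hlt. apply Hn2. exists x. split; auto; lra. }
  set (g := m / a - v x0). assert (Hg : 0 < g) by (unfold g; lra).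
  set (y := x0 + (m / a) / (g * a)).
  assert (Hdy : g * (a * (y - x0)) = m / a) by (unfold y; field; lra).
  assert (Hy : x0 <= y).
  { assert (0 < (m / a) / (g * a)); [|unfold y; lra].
    apply Rdiv_lt_0_compat; [apply Rdiv_lt_0_compat|apply Rmult_lt_0_compat]; lra. }
  assert (Hcmp := exp_comparison_le v (fun z => a * v z - P (u z)) a (m / a) x0 y Hy).
  assert (Hvy : v y - m / a <= (v x0 - m / a) * exp (a * (y - x0))).
  { apply Hcmp.
    - intros z Hz. apply Hsol. lra.
    - intros z Hz. pose proof (HPm z ltac:(lra)).
      replace (a * (v z - m / a)) with (a * v z - m) by (field; lra). lra. }
  replace (v x0 - m / a) with (- g) in Hvy by (unfold g; ring).
  pose proof (exp_ineq1_le (a * (y - x0))). pose proof (Htrap y ltac:(lra)).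
  assert (g * (1 + a * (y - x0)) <= g * exp (a * (y - x0))) by (apply Rmult_le_compat_l; lra).
  nra.
Qed.

Lemma trapped_v_cvg : filterlim v (Rbar_locally p_infty) (locally 0).
Proof.
  assert (HK : 0 < K) by (pose proof (HPpos 0 ltac:(lra)); pose proof (HPK 0 ltac:(lra)); lra).
  apply filterlim_p_infty_R_iff. intros e He.
  assert (He' : 0 < a * e / (2 * K)) by (apply Rdiv_lt_0_compat; nra).
  destruct (proj1 (filterlim_p_infty_R_iff u 1) trapped_u_cvg _ He') as [M HM].
  exists (Rmax M 0). intros x Hx.
  pose proof (Rmax_l M 0). pose proof (Rmax_r M 0).
  destruct (Htrap x ltac:(lra)) as [Hvx _]. rewrite Rminus_0_r, Rabs_right by lra.
  apply Rnot_le_lt. intros Hve.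
  (* Beyond M, v' >= a (v - e / 2), so v >= e at x keeps v >= e from x on. *)
  apply (trapped_v_not_eventually_ge e x He ltac:(lra)). intros y Hy.
  assert (HPs : forall z, x <= z -> P (u z) < a * e / 2).
  { intros z Hz. specialize (HM z ltac:(lra)). pose proof (Htrap z ltac:(lra)).
    rewrite Rabs_left in HM by lra. pose proof (HPK (u z) ltac:(lra)).
    assert (Hlt : K * (1 - u z) < K * (a * e / (2 * K))) by (apply Rmult_lt_compat_l; lra).
    replace (K * (a * e / (2 * K))) with (a * e / 2) in Hlt by (field; lra). lra. }
  assert ((v x - e / 2) * exp (a * (y - x)) <= v y - e / 2).
  { apply (exp_comparison_ge v (fun z => a * v z - P (u z))); auto.
    - intros z Hz. apply Hsol. lra.
    - intros z Hz. pose proof (HPs z ltac:(lra)). lra. }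
  assert (1 <= exp (a * (y - x))) by (pose proof (exp_ineq1_le (a * (y - x))); nra).
  nra.
Qed.

End Trapped.

(** * The combustion wave *)

Definition clamp01 (t : R) : R := Rmax 0 (Rmin t 1).

Lemma clamp01_range (t : R) : 0 <= clamp01 t <= 1.
Proof. unfold clamp01, Rmax, Rmin. repeat destruct Rle_dec; lra. Qed.

Lemma clamp01_id (t : R) : 0 <= t <= 1 -> clamp01 t = t.
Proof. unfold clamp01, Rmax, Rmin. repeat destruct Rle_dec; lra. Qed.

Lemma clamp01_lipschitz (s t : R) : Rabs (clamp01 s - clamp01 t) <= Rabs (s - t).
Proof.
  unfold clamp01, Rmax, Rmin.
  repeat destruct Rle_dec; unfold Rabs; repeat destruct Rcase_abs; lra.
Qed.

Lemma continuous_comp_clamp01 (h : R -> R) (x : R) :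
  (forall t, 0 <= t <= 1 -> cont_within (fun t => 0 <= t <= 1) h t) ->
  continuous (fun t => h (clamp01 t)) x.
Proof.
  intros H. apply continuous_R_iff. intros e He.
  destruct (proj1 (filterlim_within_R_iff _ _ _ _) (H (clamp01 x) (clamp01_range x)) e He)
    as [d [Hd Hd']].
  exists d. split; auto. intros y Hy. apply Hd'; [|apply clamp01_range].
  eapply Rle_lt_trans; [apply clamp01_lipschitz|exact Hy].
Qed.

Lemma lipschitz_comp_clamp01 (F dF : R -> R) :
  (forall x, 0 <= x <= 1 -> deriv_within (fun t => 0 <= t <= 1) F x (dF x)) ->
  (forall x, 0 <= x <= 1 -> cont_within (fun t => 0 <= t <= 1) dF x) ->
  exists K, 0 < K /\ forall s t, Rabs (F (clamp01 s) - F (clamp01 t)) <= K * Rabs (s - t).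
Proof.
  intros HD CdF.
  assert (CF : forall x, continuous (fun t => F (clamp01 t)) x)
    by (intros x; apply continuous_comp_clamp01; intros t Ht;
        eapply cont_within_of_deriv_within, HD, Ht).
  destruct (continuity_ab_maj (fun t => Rabs (dF (clamp01 t))) 0 1 Rle_0_1) as [M [HM _]].
  { intros t _. apply continuity_pt_filterlim, (continuous_Rabs_comp (fun t => dF (clamp01 t))).
    now apply continuous_comp_clamp01. }
  set (K := Rabs (dF (clamp01 M)) + 1).
  assert (HK : 0 < K) by (unfold K; pose proof (Rabs_pos (dF (clamp01 M))); lra).
  exists K. split; auto.
  assert (Inner : forall s t, 0 <= s <= t -> t <= 1 ->
            Rabs (F (clamp01 t) - F (clamp01 s)) <= K * Rabs (t - s)).
  { intros s t Hst Ht1.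
    destruct (MVT_gen (fun t => F (clamp01 t)) s t dF) as [c [Hc ->]].
    - rewrite Rmin_left, Rmax_right by lra. intros x Hx.
      assert (Loc : locally x (fun y => 0 < y < 1)).
      { apply locally_R_iff. exists (Rmin x (1 - x)). split; [apply Rmin_pos; lra|].
        intros y Hy. pose proof (Rmin_l x (1 - x)). pose proof (Rmin_r x (1 - x)).
        apply Rabs_def2 in Hy. lra. }
      apply (is_derive_ext_loc F).
      + apply (filter_imp (fun y => 0 < y < 1)); [|exact Loc]. intros y Hy. rewrite clamp01_id; lra.
      + apply (is_derive_of_deriv_within (fun t => 0 <= t <= 1)); [|apply HD; lra].
        apply (filter_imp (fun y => 0 < y < 1)); [|exact Loc]. intros y Hy. lra.
    - intros x _. apply continuity_pt_filterlim, CF.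
    - rewrite Rmin_left, Rmax_right in Hc by lra.
      rewrite Rabs_mult. apply Rmult_le_compat_r; [apply Rabs_pos|].
      pose proof (HM c ltac:(lra)) as Hc'. simpl in Hc'. rewrite clamp01_id in Hc' by lra.
      unfold K. lra. }
  intros s t.
  rewrite <- (clamp01_id (clamp01 s)), <- (clamp01_id (clamp01 t)) by apply clamp01_range.
  pose proof (clamp01_range s). pose proof (clamp01_range t).
  eapply Rle_trans; [|apply Rmult_le_compat_l; [lra|apply clamp01_lipschitz]].
  destruct (Rle_dec (clamp01 s) (clamp01 t)).
  - rewrite Rabs_minus_sym, (Rabs_minus_sym (clamp01 s)). apply Inner; lra.
  - apply Inner; lra.
Qed.

Lemma lipschitz_comp_clamp01_of_Cinf (F : R -> R) : Cinf_on (fun t => 0 <= t <= 1) F ->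
  exists K, 0 < K /\ forall s t, Rabs (F (clamp01 s) - F (clamp01 t)) <= K * Rabs (s - t).
Proof.
  intros [D [HD0 HD]].
  destruct (lipschitz_comp_clamp01 (D 0%nat) (D 1%nat)) as [K [HK HKlip]].
  - intros x Hx. now apply HD.
  - intros x Hx. eapply cont_within_of_deriv_within. now apply HD.
  - exists K. split; auto. intros s t.
    rewrite <- !HD0 by apply clamp01_range. apply HKlip.
Qed.

Section WaveFamily.

Variables (eta Qg Qp cmax K : R) (Psi thetas : R -> R).
Hypotheses (Heta : 0 < eta) (HQg : 0 < Qg) (HQp : - Qg < Qp) (Hcmax : cmax < 0) (HK : 0 < K).
Hypotheses (HPsi_pos : forall t, 0 <= t < 1 -> 0 < Psi t) (HPsi_1 : Psi 1 = 0)
  (HPsi_lip : forall s t, Rabs (Psi (clamp01 s) - Psi (clamp01 t)) <= K * Rabs (s - t)).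
Hypotheses (Hts_range : forall c, cmax <= c <= 0 -> 0 <= thetas c <= 1)
  (Hts_cont : forall c, cmax <= c <= 0 -> cont_within (fun y => cmax <= y <= 0) thetas c)
  (Hts_decr : forall c1 c2, cmax <= c1 -> c1 < c2 -> c2 <= 0 -> thetas c2 < thetas c1)
  (Hts_cmax : thetas cmax = 1).

(* Psi is only given on [0, 1]; composed with clamp01 it becomes globally Lipschitz,
   which turns the wave equation into a globally Lipschitz planar system. *)
Let P (t : R) : R := Psi (clamp01 t).
Let r : R := Qp / (Qp + Qg).
Let L : R := 1 + eta * - cmax + K.

Lemma r_lt_1 : r < 1.
Proof. unfold r. apply (Rmult_lt_reg_r (Qp + Qg)); [lra|]. field_simplify; lra. Qed.

Lemma P_continuous (t : R) : continuous P t.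
Proof.
  apply continuous_R_iff. intros e He. exists (e / K). split; [apply Rdiv_lt_0_compat; lra|].
  intros y Hy. eapply Rle_lt_trans; [apply HPsi_lip|].
  apply (Rmult_lt_compat_l K) in Hy; auto. now replace (K * (e / K)) with e in Hy by (field; lra).
Qed.

Lemma P_pos (t : R) : t < 1 -> 0 < P t.
Proof.
  intros Ht. apply HPsi_pos. pose proof (clamp01_range t). split; [lra|].
  unfold clamp01, Rmax, Rmin. repeat destruct Rle_dec; lra.
Qed.

Lemma P_le (t : R) : t <= 1 -> P t <= K * (1 - t).
Proof.
  intros Ht. pose proof (HPsi_lip t 1) as HP. unfold P.
  rewrite (clamp01_id 1), HPsi_1, Rminus_0_r, (Rabs_left1 (t - 1)) in HP by lra.
  pose proof (Rle_abs (Psi (clamp01 t))). lra.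
Qed.

(* wave_u c and wave_v c are theta and theta' on x >= 0.  The initial slope is the one
   forced by the interface condition, the left half being thetas c * exp (- c x). *)
Definition wave_u (c : R) : R -> R :=
  ode_u (fun _ w => w) (fun z w => - eta * c * w - P z) (thetas c) (- eta * c * (thetas c - r)).
Definition wave_v (c : R) : R -> R :=
  ode_v (fun _ w => w) (fun z w => - eta * c * w - P z) (thetas c) (- eta * c * (thetas c - r)).

Lemma wave_lipschitz (c : R) : cmax <= c <= 0 ->
  lipschitz2 (fun _ w => w) (fun z w => - eta * c * w - P z) L.
Proof.
  intros Hc z w z' w'. unfold L.
  replace (- eta * c * w - P z - (- eta * c * w' - P z'))
    with (- eta * c * (w - w') + - (P z - P z')) by ring.
  pose proof (Rabs_triang (- eta * c * (w - w')) (- (P z - P z'))) as Htri.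
  rewrite Rabs_Ropp, Rabs_mult, (Rabs_right (- eta * c)) in Htri by nra.
  pose proof (HPsi_lip z z') as HP. fold (P z) (P z') in HP.
  pose proof (Rabs_pos (w - w')). pose proof (Rabs_pos (z - z')).
  assert (- eta * c * Rabs (w - w') <= eta * - cmax * Rabs (w - w'))
    by (apply Rmult_le_compat_r; nra).
  assert (0 <= eta * - cmax * Rabs (z - z')) by (apply Rmult_le_pos; nra).
  assert (0 <= K * Rabs (w - w')) by (apply Rmult_le_pos; lra).
  lra.
Qed.

Lemma wave_solution (c : R) : cmax <= c <= 0 ->
  wave_u c 0 = thetas c /\ wave_v c 0 = - eta * c * (thetas c - r) /\
  solves_system (fun _ w => w) (fun z w => - eta * c * w - P z) (wave_u c) (wave_v c).
Proof.
  intros Hc. apply (ode_solution _ _ L); [unfold L; nra|now apply wave_lipschitz].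
Qed.

Lemma wave_gap_le (c0 c X Vm : R) : cmax <= c0 <= 0 -> cmax <= c <= 0 -> 0 <= X ->
  (forall x, 0 <= x <= X -> Rabs (wave_v c0 x) <= Vm) -> forall x, 0 <= x <= X ->
  Rabs (wave_u c x - wave_u c0 x) + Rabs (wave_v c x - wave_v c0 x)
  <= ((1 + eta * - cmax) * Rabs (thetas c - thetas c0)
      + eta * (Rabs (thetas c0 - r) + Vm * X) * Rabs (c - c0)) * exp (L * X).
Proof.
  intros Hc0 Hc HX HVm x Hx.
  destruct (wave_solution c0 Hc0) as [U0 [V0 S0]]. destruct (wave_solution c Hc) as [U [V S]].
  assert (Hdc : Rabs (- eta * c - - eta * c0) = eta * Rabs (c - c0)).
  { replace (- eta * c - - eta * c0) with (- eta * (c - c0)) by ring.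
    rewrite Rabs_mult, Rabs_left by lra. ring. }
  eapply Rle_trans.
  { apply (solutions_gap_le _ _ _ _ L (eta * Rabs (c - c0) * Vm) X _ _ _ _
             ltac:(unfold L; nra) (wave_lipschitz c Hc) (wave_lipschitz c0 Hc0)); auto.
    - pose proof (Rabs_pos (c - c0)). pose proof (HVm 0 ltac:(lra)).
      pose proof (Rabs_pos (wave_v c0 0)). apply Rmult_le_pos; nra.
    - intros t Ht. rewrite Rminus_diag, Rabs_R0, Rplus_0_l.
      replace (- eta * c * wave_v c0 t - P (wave_u c0 t)
               - (- eta * c0 * wave_v c0 t - P (wave_u c0 t)))
        with ((- eta * c - - eta * c0) * wave_v c0 t) by ring.
      rewrite Rabs_mult, Hdc. apply Rmult_le_compat_l; [pose proof (Rabs_pos (c - c0)); nra|].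
      now apply HVm. }
  apply Rmult_le_compat_r; [left; apply exp_pos|]. rewrite U, V, U0, V0.
  replace (- eta * c * (thetas c - r) - - eta * c0 * (thetas c0 - r))
    with (- eta * c * (thetas c - thetas c0) + (- eta * c - - eta * c0) * (thetas c0 - r)) by ring.
  pose proof (Rabs_triang (- eta * c * (thetas c - thetas c0))
                          ((- eta * c - - eta * c0) * (thetas c0 - r))) as Htri.
  rewrite (Rabs_mult (- eta * c)), (Rabs_mult (- eta * c - - eta * c0)), Hdc,
    (Rabs_right (- eta * c)) in Htri by nra.
  assert (- eta * c * Rabs (thetas c - thetas c0) <= eta * - cmax * Rabs (thetas c - thetas c0))
    by (apply Rmult_le_compat_r; [apply Rabs_pos|nra]).
  pose proof (Rabs_pos (thetas c0 - r)). pose proof (Rabs_pos (c - c0)).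
  pose proof (HVm 0 ltac:(lra)). pose proof (Rabs_pos (wave_v c0 0)).
  nra.
Qed.

Lemma wave_dependence (c0 X e : R) : cmax <= c0 <= 0 -> 0 <= X -> 0 < e -> exists d, 0 < d /\
  forall c, cmax <= c <= 0 -> Rabs (c - c0) < d -> forall x, 0 <= x <= X ->
  Rabs (wave_u c x - wave_u c0 x) + Rabs (wave_v c x - wave_v c0 x) < e.
Proof.
  intros Hc0 HX He.
  destruct (continuity_ab_maj (fun x => Rabs (wave_v c0 x)) 0 X HX) as [xm [Hxm _]].
  { intros x Hx. apply continuity_pt_filterlim, (continuous_Rabs_comp (wave_v c0)).
    destruct (wave_solution c0 Hc0) as [_ [_ S0]].
    exact (continuous_of_is_derive _ _ _ (proj2 (S0 x ltac:(lra)))). }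
  set (A := 1 + eta * - cmax).
  set (C := eta * (Rabs (thetas c0 - r) + Rabs (wave_v c0 xm) * X)).
  set (q := e / (2 * exp (L * X))).
  pose proof (exp_pos (L * X)).
  assert (Hq : 0 < q) by (unfold q; apply Rdiv_lt_0_compat; lra).
  assert (HA : 0 < A) by (unfold A; nra).
  assert (HC : 0 <= C).
  { unfold C. pose proof (Rabs_pos (thetas c0 - r)). pose proof (Rabs_pos (wave_v c0 xm)).
    apply Rmult_le_pos; nra. }
  destruct (proj1 (filterlim_within_R_iff _ _ _ _) (Hts_cont c0 Hc0) (q / A)
              ltac:(apply Rdiv_lt_0_compat; lra)) as [d [Hd Hts]].
  exists (Rmin d (q / (C + 1))). split; [apply Rmin_pos; [lra|apply Rdiv_lt_0_compat; lra]|].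
  intros c Hc Hcd x Hx.
  eapply Rle_lt_trans; [apply (wave_gap_le c0 c X (Rabs (wave_v c0 xm))); auto|].
  assert (Hth : A * Rabs (thetas c - thetas c0) < q).
  { specialize (Hts c (Rlt_le_trans _ _ _ Hcd (Rmin_l _ _)) Hc).
    apply (Rmult_lt_compat_l A) in Hts; [|lra].
    now replace (A * (q / A)) with q in Hts by (field; lra). }
  assert (Hcc : C * Rabs (c - c0) < q).
  { assert (Hlt := Rlt_le_trans _ _ _ Hcd (Rmin_r _ _)).
    apply (Rmult_lt_compat_l (C + 1)) in Hlt; [|lra].
    replace ((C + 1) * (q / (C + 1))) with q in Hlt by (field; lra).
    pose proof (Rabs_pos (c - c0)). nra. }
  fold A C. replace e with (2 * q * exp (L * X)) by (unfold q; field; lra). nra.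
Qed.

Lemma wave_shooting_family :
  shooting_family cmax 0 K (fun c => - eta * c) P wave_u wave_v.
Proof.
  split.
  - exact Hcmax.
  - exact P_pos.
  - exact P_le.
  - intros c Hc. nra.
  - intros c Hc. now apply wave_solution.
  - intros c Hc. destruct (wave_solution c ltac:(lra)) as [-> _].
    rewrite <- Hts_cmax. apply Hts_decr; lra.
  - destruct (wave_solution cmax ltac:(lra)) as [-> [-> _]].
    split; [exact Hts_cmax|]. rewrite Hts_cmax. pose proof r_lt_1.
    apply Rmult_lt_0_compat; [nra|lra].
  - destruct (wave_solution 0 ltac:(lra)) as [_ [-> _]]. ring.
  - intros c0 X e Hc0 HX He. now apply wave_dependence.
Qed.

Definition wave_profile (c x : R) : R :=
  if Rle_dec x 0 then thetas c * exp (- c * x) else wave_u c x.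

Section Profile.

Variable c : R.
Hypotheses (Hc : cmax < c < 0) (Htrap : forall x, 0 <= x -> 0 < wave_v c x /\ wave_u c x < 1).

Let Sol := proj2 (proj2 (wave_solution c ltac:(lra))).

Lemma wave_u_range (x : R) : 0 <= x -> 0 <= wave_u c x <= 1.
Proof.
  intros Hx. pose proof (proj1 (wave_solution c ltac:(lra))) as U0.
  assert (0 <= thetas c) by (apply Hts_range; lra).
  assert (thetas c <= wave_u c x)
    by (rewrite <- U0; apply (trapped_u_le (- eta * c) P _ (wave_v c)); auto; lra).
  pose proof (Htrap x Hx). lra.
Qed.

Lemma wave_profile_right (x : R) : 0 <= x -> wave_profile c x = wave_u c x.
Proof.
  intros Hx. unfold wave_profile. destruct (Rle_dec x 0); [|reflexivity].
  replace x with 0 by lra. rewrite Rmult_0_r, exp_0, Rmult_1_r.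
  symmetry. apply wave_solution. lra.
Qed.

Lemma wave_profile_range (x : R) : 0 <= wave_profile c x <= 1.
Proof.
  destruct (Rle_dec x 0) as [Hx|Hx]; [|rewrite wave_profile_right by lra; apply wave_u_range; lra].
  unfold wave_profile. destruct (Rle_dec x 0); [|lra].
  assert (0 <= thetas c <= 1) by (apply Hts_range; lra).
  assert (exp (- c * x) <= 1) by (rewrite <- exp_0; apply exp_le_compat; nra).
  pose proof (exp_pos (- c * x)). split; nra.
Qed.

Lemma wave_profile_continuous (x : R) : continuous (wave_profile c) x.
Proof.
  apply continuous_glue.
  - intros y _. apply (ex_derive_continuous (V := R_NormedModule)). auto_derive. auto.
  - intros y Hy. exact (continuous_of_is_derive _ _ _ (proj1 (Sol y Hy))).
  - rewrite Rmult_0_r, exp_0, Rmult_1_r. symmetry. apply wave_solution. lra.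
Qed.

Lemma wave_profile_C2_left : C2_on (fun x => x <= 0) (wave_profile c)
  (fun x => - c * (thetas c * exp (- c * x))) (fun x => - c * (- c * (thetas c * exp (- c * x)))).
Proof.
  apply (C2_on_of_derive _ _ (fun x => thetas c * exp (- c * x))).
  { intros y Hy. unfold wave_profile. now destruct (Rle_dec y 0). }
  intros x _. split; [auto_derive; auto; ring|split; [auto_derive; auto; ring|]].
  apply (ex_derive_continuous (V := R_NormedModule)). auto_derive. auto.
Qed.

Lemma wave_profile_C2_right : C2_on (fun x => 0 <= x) (wave_profile c)
  (wave_v c) (fun x => - eta * c * wave_v c x - P (wave_u c x)).
Proof.
  apply (C2_on_of_derive _ _ (wave_u c)); [exact wave_profile_right|].
  intros x Hx. destruct (Sol x Hx) as [Du Dv]. split; [exact Du|split; [exact Dv|]].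
  apply (continuous_minus (fun y => - eta * c * wave_v c y) (fun y => P (wave_u c y))).
  - apply (continuous_scal_r (K := R_AbsRing) (V := R_NormedModule) (- eta * c) (wave_v c)).
    exact (continuous_of_is_derive _ _ _ Dv).
  - apply (continuous_comp (wave_u c) P); [exact (continuous_of_is_derive _ _ _ Du)|].
    apply P_continuous.
Qed.

Lemma wave_profile_solves : solves_Pc eta Qg Qp Psi thetas c (wave_profile c).
Proof.
  split; [exact wave_profile_range|split; [exact wave_profile_continuous|]].
  exists (fun x => - c * (thetas c * exp (- c * x))),
    (fun x => - c * (- c * (thetas c * exp (- c * x)))),
    (wave_v c), (fun x => - eta * c * wave_v c x - P (wave_u c x)).
  split; [exact wave_profile_C2_left|split; [exact wave_profile_C2_right|]].
  split; [intros x _; ring|split].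
  { intros x Hx. rewrite wave_profile_right by lra. unfold P.
    rewrite clamp01_id by (apply wave_u_range; lra). ring. }
  split.
  { apply (filterlim_ext_loc (fun x => thetas c * exp (- c * x))).
    - exists 0. intros x Hx. unfold wave_profile. destruct (Rle_dec x 0); [reflexivity|lra].
    - apply filterlim_mul_exp_m_infty. lra. }
  split.
  { unfold wave_profile. destruct (Rle_dec 0 0); [|lra].
    now rewrite Rmult_0_r, exp_0, Rmult_1_r. }
  assert (Hu0 : 0 <= wave_u c 0) by (apply wave_u_range; lra).
  split.
  { apply (filterlim_ext_loc (wave_u c)).
    - exists 0. intros x Hx. symmetry. apply wave_profile_right. lra.
    - apply (trapped_u_cvg (- eta * c) P _ (wave_v c)); auto;
        [nra|apply P_continuous|apply P_pos]. }
  split.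
  { apply (filterlim_ext (fun x => (- c * thetas c) * exp (- c * x))); [intros x; ring|].
    apply filterlim_mul_exp_m_infty. lra. }
  split.
  { apply (trapped_v_cvg (- eta * c) K P (wave_u c)); auto;
      [nra|apply P_continuous|apply P_pos|apply P_le]. }
  pose proof (proj1 (proj2 (wave_solution c ltac:(lra)))) as V0.
  unfold Sfun. rewrite V0, Rmult_0_r, exp_0. fold r. ring.
Qed.

End Profile.

End WaveFamily.

Lemma abs_add_mul_lt (a b c e : R) : 0 < e -> Rabs a < e / 2 ->
  Rabs b < e / (2 * (Rabs c + 1)) -> Rabs (a + c * b) < e.
Proof.
  intros He Ha Hb. assert (Hc : 0 < Rabs c + 1) by (pose proof (Rabs_pos c); lra).
  eapply Rle_lt_trans; [apply Rabs_triang|]. rewrite Rabs_mult.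
  assert (Hcb : Rabs c * Rabs b <= (Rabs c + 1) * (e / (2 * (Rabs c + 1))))
    by (apply Rmult_le_compat; try apply Rabs_pos; lra).
  replace ((Rabs c + 1) * (e / (2 * (Rabs c + 1)))) with (e / 2) in Hcb by (field; lra). lra.
Qed.

Section LeftHalf.

Variables (c : R) (theta d1 d2 : R -> R).
Hypotheses (HC2 : C2_on (fun x => x <= 0) theta d1 d2)
  (Hode : forall x, x < 0 -> d2 x + c * d1 x = 0)
  (Lth : filterlim theta (Rbar_locally m_infty) (locally 0))
  (Ld1 : filterlim d1 (Rbar_locally m_infty) (locally 0)).

Lemma left_first_integral_zero (y : R) : y < 0 -> d1 y + c * theta y = 0.
Proof.
  intros Hy. set (h x := d1 x + c * theta x).
  assert (Hc : 0 < 2 * (Rabs c + 1)) by (pose proof (Rabs_pos c); lra).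
  assert (Hconst : forall x, x <= y -> h x = h y).
  { intros x Hxy. apply (const_of_derive_zero h (fun z => d2 z + c * d1 z)); [lra| |].
    - intros z Hz. destruct (HC2 z ltac:(lra)) as [D1 [D2 _]].
      assert (Loc : locally z (fun x => x <= 0)).
      { apply locally_R_iff. exists (- z). split; [lra|].
        intros w Hw. apply Rabs_def2 in Hw. lra. }
      apply (is_derive_plus d1 (fun x => c * theta x));
        [|apply (is_derive_scal (fun x => theta x))]; eapply is_derive_of_deriv_within; eauto.
    - intros z Hz. apply Hode. lra. }
  apply eq_0_of_forall_abs_lt. intros e He.
  destruct (proj1 (filterlim_m_infty_R_iff _ _) Ld1 (e / 2) ltac:(lra)) as [M1 HM1].
  destruct (proj1 (filterlim_m_infty_R_iff _ _) Lth (e / (2 * (Rabs c + 1))))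
    as [M2 HM2]; [apply Rdiv_lt_0_compat; lra|].
  set (x := Rmin y (Rmin M1 M2) - 1).
  assert (x < M1 /\ x < M2 /\ x <= y)
    by (unfold x; pose proof (Rmin_l y (Rmin M1 M2)); pose proof (Rmin_r y (Rmin M1 M2));
        pose proof (Rmin_l M1 M2); pose proof (Rmin_r M1 M2); lra).
  fold (h y). rewrite <- (Hconst x) by lra. apply abs_add_mul_lt; auto.
  - rewrite <- (Rminus_0_r (d1 x)). apply HM1. lra.
  - rewrite <- (Rminus_0_r (theta x)). apply HM2. lra.
Qed.

Lemma left_slope_at_0 : d1 0 = - c * theta 0.
Proof.
  assert (d1 0 + c * theta 0 = 0); [|lra].
  apply eq_0_of_forall_abs_lt. intros e He.
  assert (Hc : 0 < 2 * (Rabs c + 1)) by (pose proof (Rabs_pos c); lra).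
  destruct (HC2 0 ltac:(lra)) as [D1 [D2 _]].
  destruct (proj1 (filterlim_within_R_iff _ _ _ _) (cont_within_of_deriv_within _ _ _ _ D2)
              (e / 2) ltac:(lra)) as [r1 [Hr1 H1]].
  destruct (proj1 (filterlim_within_R_iff _ _ _ _) (cont_within_of_deriv_within _ _ _ _ D1)
              (e / (2 * (Rabs c + 1)))) as [r2 [Hr2 H2]]; [apply Rdiv_lt_0_compat; lra|].
  set (y := - Rmin r1 r2 / 2).
  assert (y < 0 /\ Rabs (y - 0) < r1 /\ Rabs (y - 0) < r2)
    by (unfold y; pose proof (Rmin_l r1 r2); pose proof (Rmin_r r1 r2);
        pose proof (Rmin_pos r1 r2 Hr1 Hr2); rewrite Rabs_left; lra).
  replace (d1 0 + c * theta 0) with ((d1 0 - d1 y) + c * (theta 0 - theta y))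
    by (pose proof (left_first_integral_zero y ltac:(lra)); nra).
  apply abs_add_mul_lt; auto.
  - rewrite Rabs_minus_sym. apply H1; lra.
  - rewrite Rabs_minus_sym. apply H2; lra.
Qed.

End LeftHalf.

Lemma no_solution_at_cmax (eta Qg Qp cmax : R) (Psi thetas theta : R -> R) :
  0 < eta -> 0 < Qg -> - Qg < Qp -> cmax < 0 -> thetas cmax = 1 ->
  ~ solves_Pc eta Qg Qp Psi thetas cmax theta.
Proof.
  intros Heta HQg HQp Hcmax Hts
    [Hrange [_ [dl1 [dl2 [dr1 [dr2 [CL [CR [OL [_ [Lm [T0 [_ [Ldm [_ Hif]]]]]]]]]]]]]]].
  unfold Sfun in Hif. rewrite Hts in T0.
  assert (Hr : Qp / (Qp + Qg) < 1)
    by (apply (Rmult_lt_reg_r (Qp + Qg)); [lra|field_simplify; lra]).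
  assert (Hdr : dr1 0 <= 0).
  { apply (deriv_within_nonpos_at_max theta 0); [apply CR; lra|].
    intros y _. rewrite T0. apply Hrange. }
  pose proof (left_slope_at_0 cmax theta dl1 dl2 CL OL Lm Ldm) as Hdl. rewrite T0 in Hdl.
  assert (0 < eta * ((- cmax) * (1 - Qp / (Qp + Qg))))
    by (apply Rmult_lt_0_compat; [lra|apply Rmult_lt_0_compat; lra]).
  nra.
Qed.

Lemma no_solution_at_0 (eta Qg Qp : R) (Psi thetas theta : R -> R) :
  (forall t, 0 <= t <= 1 -> 0 <= Psi t) -> thetas 0 = 0 ->
  ~ solves_Pc eta Qg Qp Psi thetas 0 theta.
Proof.
  intros HPsi Hts
    [Hrange [_ [dl1 [dl2 [dr1 [dr2 [CL [CR [OL [OR [Lm [T0 [Lp [Ldm [_ Hif]]]]]]]]]]]]]]].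
  unfold Sfun in Hif. rewrite Hts in T0.
  pose proof (left_slope_at_0 0 theta dl1 dl2 CL OL Lm Ldm) as Hdl.
  assert (Hdr0 : dr1 0 = 0) by (rewrite T0 in Hdl; nra).
  assert (RD : forall x, 0 < x -> is_derive theta x (dr1 x) /\ is_derive dr1 x (dr2 x)).
  { intros x Hx. destruct (CR x ltac:(lra)) as [D1 [D2 _]].
    assert (Loc : locally x (fun y => 0 <= y))
      by (apply locally_R_iff; exists x; split; [lra|intros w Hw; apply Rabs_def2 in Hw; lra]).
    split; eapply is_derive_of_deriv_within; eauto. }
  destruct (CR 0 ltac:(lra)) as [D1 [D2 _]].
  assert (Hslope : forall x, 0 < x -> dr1 x <= 0).
  { intros x Hx. rewrite <- Hdr0.
    apply (le_at_0_of_nonincreasing dr1 (cont_within_of_deriv_within _ _ _ _ D2)); auto.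
    intros y z Hyz. apply Ropp_le_cancel.
    apply (le_of_derive_nonneg (fun w => - dr1 w) (fun w => - dr2 w)); [lra| |].
    - intros w Hw. apply (is_derive_opp dr1 w (dr2 w)), RD. lra.
    - intros w Hw. specialize (OR w ltac:(lra)). pose proof (HPsi (theta w) (Hrange w)). lra. }
  assert (Hneg : forall x, 0 < x -> theta x <= 0).
  { intros x Hx. rewrite <- T0.
    apply (le_at_0_of_nonincreasing theta (cont_within_of_deriv_within _ _ _ _ D1)); auto.
    intros y z Hyz. apply Ropp_le_cancel.
    apply (le_of_derive_nonneg (fun w => - theta w) (fun w => - dr1 w)); [lra| |].
    - intros w Hw. apply (is_derive_opp theta w (dr1 w)), RD. lra.
    - intros w Hw. pose proof (Hslope w ltac:(lra)). lra. }
  destruct (proj1 (filterlim_p_infty_R_iff _ _) Lp (1 / 2) ltac:(lra)) as [M HM].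
  specialize (HM (Rmax M 0 + 1) ltac:(pose proof (Rmax_l M 0); lra)).
  pose proof (Hneg (Rmax M 0 + 1) ltac:(pose proof (Rmax_r M 0); lra)).
  apply Rabs_def2 in HM. lra.
Qed.

Theorem proposition6
  (eta Qg Qp cmax : R) (Psi thetas : R -> R)
  (Heta : 0 < eta) (HQg : 0 < Qg) (HQp : - Qg < Qp)
  (HPsi_smooth : Cinf_on (fun t => 0 <= t <= 1) Psi)
  (HPsi_nonneg : forall t, 0 <= t <= 1 -> 0 <= Psi t)
  (HPsi_pos : forall t, 0 <= t < 1 -> 0 < Psi t)
  (HPsi_1 : Psi 1 = 0)
  (Hcmax : cmax < 0)
  (Hts_range : forall c, cmax <= c <= 0 -> 0 <= thetas c <= 1)
  (Hts_cont : forall c, cmax <= c <= 0 ->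
                cont_within (fun y => cmax <= y <= 0) thetas c)
  (Hts_decr : forall c1 c2, cmax <= c1 -> c1 < c2 -> c2 <= 0 ->
                thetas c2 < thetas c1)
  (Hts_0 : thetas 0 = 0)
  (Hts_cmax : thetas cmax = 1)
  (Hts_smooth : Cinf_on (fun y => cmax <= y < 0) thetas)
  (Hts_deriv_neg : forall c l, cmax <= c < 0 ->
                deriv_within (fun y => cmax <= y < 0) thetas c l -> l < 0) :
  (exists c, cmax <= c <= 0 /\
     exists theta, solves_Pc eta Qg Qp Psi thetas c theta) /\
  (forall c, cmax <= c <= 0 ->
     (exists theta, solves_Pc eta Qg Qp Psi thetas c theta) ->
     cmax < c < 0).
Proof.
  split.
  - destruct (lipschitz_comp_clamp01_of_Cinf Psi HPsi_smooth) as [K [HK HPsi_lip]].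
    destruct (exists_trapped_trajectory _ _ _ _ _ _ _
                (wave_shooting_family eta Qg Qp cmax K Psi thetas Heta HQg HQp Hcmax HK
                   HPsi_pos HPsi_1 HPsi_lip Hts_cont Hts_decr Hts_cmax))
      as [c [Hc Htrap]].
    exists c. split; [lra|]. exists (wave_profile eta Qg Qp Psi thetas c).
    now apply (wave_profile_solves eta Qg Qp cmax K).
  - intros c Hc [theta Hth]. split.
    + destruct (Req_dec c cmax) as [->|]; [|lra].
      now apply (no_solution_at_cmax eta Qg Qp cmax Psi thetas theta) in Hth.
    + destruct (Req_dec c 0) as [->|]; [|lra].
      now apply (no_solution_at_0 eta Qg Qp Psi thetas theta) in Hth.
Qed.
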